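(* Let $u_0,\theta_0,\psi_0\in\mathbb R$ satisfy $a_ju_0+1>0$ for $j=1,\ldots,m$, and suppose $A:=Q(u_0)^{1/2}\sin\theta_0\in(0,1)$. Then there exist unique solutions $u(t),\theta(t),\psi(t)$, defined for all $t\in\mathbb R$, of \[\frac{du}{dt}=2Q(u)^{1/2}\cos\theta,\] \[\frac{d\theta}{dt}=-Q(u)^{1/2}\sin\theta\sum_{j=1}^m\frac{a_j}{a_ju+1},\] \[\frac{d\psi}{dt}=-Q(u)^{1/2}\sin\theta\sum_{j=1}^m\frac{a_j^2}{a_ju+1},\] with $u(0)=u_0$, $\theta(0)=\theta_0$ and $\psi(0)=\psi_0$. Moreover, $u$ and $\theta$ are nonconstant and periodic with some period $T>0$, and there exists $\Psi>0$ with $\psi(t+T)=\psi(t)-\Psi$ for all $t\in\mathbb R$.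
   Context: Standing assumptions: $m\ge3$, and $a_1\le\cdots\le a_m$ are integers, not all zero, with highest common factor $1$ and $a_1+\cdots+a_m=0$. $Q(u)=\prod_{j=1}^m(a_ju+1)$. *)

From Stdlib Require Import Reals ZArith List.
From Coquelicot Require Import Coquelicot.
Import ListNotations.
Open Scope R_scope.

(* The integers a_1 <= ... <= a_m are encoded (0-based) as a 0, ..., a (m-1). *)

Definition hcf (a : nat -> Z) (m : nat) : Z :=
  fold_right Z.gcd 0%Z (map a (seq 0 m)).

Definition standing (a : nat -> Z) (m : nat) : Prop :=
  (3 <= m)%nat /\
  (forall i j, (i <= j)%nat -> (j < m)%nat -> (a i <= a j)%Z) /\
  (exists j, (j < m)%nat /\ a j <> 0%Z) /\
  hcf a m = 1%Z /\
  fold_right Z.add 0%Z (map a (seq 0 m)) = 0%Z.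

Definition Q (a : nat -> Z) (m : nat) (u : R) : R :=
  fold_right Rmult 1 (map (fun j => IZR (a j) * u + 1) (seq 0 m)).

Definition S (k : nat) (a : nat -> Z) (m : nat) (u : R) : R :=
  fold_right Rplus 0 (map (fun j => IZR (a j) ^ k / (IZR (a j) * u + 1)) (seq 0 m)).

Definition solves (a : nat -> Z) (m : nat) (u th ps : R -> R) : Prop :=
  forall t : R,
    is_derive u t (2 * sqrt (Q a m (u t)) * cos (th t)) /\
    is_derive th t (- sqrt (Q a m (u t)) * sin (th t) * S 1 a m (u t)) /\
    is_derive ps t (- sqrt (Q a m (u t)) * sin (th t) * S 2 a m (u t)).

From Stdlib Require Import Reals ZArith List.
From Coquelicot Require Import Coquelicot.
From Stdlib Require Import Lra Lia Ranalysis5.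
From Stdlib Require Import ClassicalEpsilon Classical.
Open Scope R_scope.

(* Writing [w = sqrt (Q u) cos th], the quantity [A = sqrt (Q u) sin th] is a first integral and
   [(u, w)] solves the Hamiltonian system [u' = 2 w], [w' = Q'(u)] on the level set
   [w ^ 2 = Q u - A ^ 2].  As the [a_j] sum to zero they take both signs, so the component of
   [{u | a_j u + 1 > 0 for all j}] containing [0] is bounded; on it [S_1 = Q'/Q] is strictly
   decreasing, so [Q] has a single critical point [c], a maximum with [Q c >= Q 0 = 1 > A ^ 2].
   Writing [Q c - Q u = V(u) ^ 2] with [V] increasing, the orbit is [V u = rho cos b],
   [w = - rho sin b], where [b' > 0] is a [2 PI]-periodic function of [b]; hence [u] and [w] are
   periodic, [th] is recovered from [w / A], and [ps' = - A S_2(u) < 0] produces the drift.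
   Uniqueness: along any solution [A] stays constant, which traps [u] in a compact interval on
   which [Q'] is Lipschitz, and Gronwall's lemma applies to [(u, w)]. *)

(** * Calculus on the real line *)

Lemma is_derive_eq (f : R -> R) (x l l' : R) : is_derive f x l -> l = l' -> is_derive f x l'.
Proof. now intros H <-. Qed.

Lemma is_derive_continuity_pt (f : R -> R) (x l : R) : is_derive f x l -> continuity_pt f x.
Proof. intros H. apply continuity_pt_filterlim, (ex_derive_continuous f x), (ex_intro _ l H). Qed.

Lemma is_derive_shift (c x : R) : is_derive (fun t => t - c) x 1.
Proof. auto_derive; [auto | ring]. Qed.

Lemma MVT_interval (f df : R -> R) (x z : R) : x < z ->
  (forall s, x <= s <= z -> is_derive f s (df s)) ->
  exists c, x < c < z /\ f z - f x = df c * (z - x).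
Proof.
  intros Hxz H.
  destruct (MVT_cor2 f df x z Hxz) as [c [E Hc]]; [intros; apply is_derive_Reals, H; lra|].
  now exists c.
Qed.

Lemma derive_pos_increasing (f df : R -> R) (a b : R) :
  (forall x, a <= x <= b -> is_derive f x (df x)) -> (forall x, a < x < b -> 0 < df x) ->
  forall x z, a <= x -> x < z -> z <= b -> f x < f z.
Proof.
  intros D H x z Hax Hxz Hzb.
  destruct (MVT_interval f df x z Hxz) as [c [Hc E]]; [intros s Hs; apply D; lra|].
  assert (0 < df c) by (apply H; lra). nra.
Qed.

Lemma derive_neg_decreasing (f df : R -> R) (a b : R) :
  (forall x, a <= x <= b -> is_derive f x (df x)) -> (forall x, a < x < b -> df x < 0) ->
  forall x z, a <= x -> x < z -> z <= b -> f z < f x.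
Proof.
  intros D H x z Hax Hxz Hzb.
  enough (- f x < - f z) by lra.
  apply (derive_pos_increasing (fun t => - f t) (fun t => - df t) a b); auto.
  - intros y Hy. apply (is_derive_opp f), D, Hy.
  - intros y Hy. pose proof (H y Hy). lra.
Qed.

Lemma derive_nonpos_le (f df : R -> R) (x z : R) : x <= z ->
  (forall s, x <= s <= z -> is_derive f s (df s) /\ df s <= 0) -> f z <= f x.
Proof.
  intros Hxz H. destruct (Req_dec x z) as [->|Hne]; [lra|].
  destruct (MVT_interval f df x z) as [c [Hc E]]; [lra | intros s Hs; apply H; lra |].
  assert (df c <= 0) by (apply H; lra). nra.
Qed.

Lemma derive_zero_const_interval (f : R -> R) (x z : R) : x <= z ->
  (forall s, x <= s <= z -> is_derive f s 0) -> f x = f z.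
Proof.
  intros Hxz H. destruct (Req_dec x z) as [->|Hne]; [lra|].
  destruct (MVT_interval f (fun _ => 0) x z) as [c [Hc E]]; [lra | intros s Hs; apply H; lra | lra].
Qed.

Lemma derive_zero_const (f : R -> R) : (forall s, is_derive f s 0) -> forall x z, f x = f z.
Proof.
  intros H x z. destruct (Rle_dec x z).
  - apply derive_zero_const_interval; auto.
  - symmetry; apply derive_zero_const_interval; auto; lra.
Qed.

Lemma derive_same_eq (f g df : R -> R) : (forall t, is_derive f t (df t)) ->
  (forall t, is_derive g t (df t)) -> f 0 = g 0 -> forall t, f t = g t.
Proof.
  intros Df Dg E0 t.
  assert (D : forall s, is_derive (fun s => f s - g s) s 0).
  { intros s. apply (is_derive_eq _ _ (df s - df s)); [apply (is_derive_minus f g); auto | ring]. }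
  pose proof (derive_zero_const _ D t 0). simpl in *. lra.
Qed.

Lemma derive_periodic_increment (f df : R -> R) (T : R) :
  (forall t, is_derive f t (df t)) -> (forall t, df (t + T) = df t) ->
  forall t, f (t + T) = f t + (f T - f 0).
Proof.
  intros D Hper t.
  assert (C : forall s, is_derive (fun s => f (s + T) - f s) s 0).
  { intros s. apply (is_derive_eq _ _ (1 * df (s + T) - df s)); [|rewrite Hper; ring].
    apply (is_derive_minus (fun s => f (s + T)) f); [|apply D].
    apply (is_derive_comp f (fun s => s + T)); [apply D | auto_derive; [auto | ring]]. }
  pose proof (derive_zero_const _ C t 0) as E. simpl in E. rewrite Rplus_0_l in E. lra.
Qed.

Lemma RInt_primitive_derive (f : R -> R) (a : R) : (forall x, continuous f x) ->
  forall x, is_derive (fun x => RInt f a x) x (f x).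
Proof.
  intros Hc x. apply (is_derive_RInt f (fun x => RInt f a x) a x); [|apply Hc].
  apply filter_forall. intros y.
  apply (RInt_correct f a y), (ex_RInt_continuous f a y). intros; apply Hc.
Qed.

Lemma primitive_periodic_drift (h : R -> R) (T ps0 : R) : 0 < T ->
  (forall t, continuous h t) -> (forall t, h t < 0) -> (forall t, h (t + T) = h t) ->
  exists ps : R -> R, ps 0 = ps0 /\ (forall t, is_derive ps t (h t)) /\
    exists Psi, 0 < Psi /\ forall t, ps (t + T) = ps t - Psi.
Proof.
  intros HT Hc Hneg Hper.
  set (ps := fun t => ps0 + RInt h 0 t).
  assert (Dps : forall t, is_derive ps t (h t)).
  { intros t. apply (is_derive_eq _ _ (0 + h t)); [|ring].
    apply (is_derive_plus (fun _ => ps0) (fun t => RInt h 0 t)); [exact (is_derive_const _ _)|].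
    apply RInt_primitive_derive, Hc. }
  exists ps. split; [unfold ps; rewrite RInt_point; unfold zero; simpl; ring|]. split; [exact Dps|].
  exists (ps 0 - ps T). split.
  - pose proof (derive_neg_decreasing ps h 0 T (fun t _ => Dps t) (fun t _ => Hneg t) 0 T)
      as X. lra.
  - intros t. rewrite (derive_periodic_increment ps h T Dps Hper t). ring.
Qed.

Lemma real_induction_nonneg (P : R -> Prop) :
  (forall t, 0 <= t -> (forall s, 0 <= s < t -> P s) -> P t) ->
  (forall t, 0 <= t -> P t -> exists d, 0 < d /\ forall s, t <= s < t + d -> P s) ->
  forall t, 0 <= t -> P t.
Proof.
  intros Hcl Hop t1 Ht1. apply NNPP; intro Hn.
  set (E := fun x => 0 <= x <= t1 /\ forall s, 0 <= s < x -> P s).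
  destruct (completeness E) as [m [Hub Hlub]].
  - exists t1. intros x [Hx _]. lra.
  - exists 0. split; [lra|]. intros s Hs; lra.
  - assert (Hm0 : 0 <= m) by (apply Hub; split; [lra | intros; lra]).
    assert (Hmt : m <= t1) by (apply Hlub; intros x [Hx _]; lra).
    assert (Hb : forall s, 0 <= s < m -> P s).
    { intros s Hs. apply NNPP; intro Hns.
      enough (m <= s) by lra. apply Hlub. intros x [Hx Hx2].
      destruct (Rle_dec x s); auto. exfalso; apply Hns, Hx2; lra. }
    assert (Pm : P m) by (apply Hcl; auto).
    destruct (Req_dec m t1) as [->|Hne]; [contradiction|].
    destruct (Hop m Hm0 Pm) as [d [Hd Hd2]].
    set (m' := Rmin (m + d) t1).
    assert (m < m') by (unfold m', Rmin; destruct Rle_dec; lra).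
    enough (m' <= m) by lra.
    apply Hub. split; [unfold m'; split; [apply Rmin_glb; lra | apply Rmin_r]|].
    intros s Hs. destruct (Rlt_dec s m); [apply Hb; lra|].
    apply Hd2. split; [lra|]. apply Rlt_le_trans with (1 := proj2 Hs), Rmin_l.
Qed.

Lemma continuity_pt_ge (f : R -> R) (t c : R) : continuity_pt f t ->
  (forall d, 0 < d -> exists s, Rabs (s - t) < d /\ c <= f s) -> c <= f t.
Proof.
  intros Hc H. apply Rnot_lt_le. intro Hlt.
  destruct (Hc (c - f t)) as [d [Hd Hd2]]; [lra|].
  destruct (H d Hd) as [s [Hs Hfs]].
  destruct (Req_dec s t) as [->|Hne]; [lra|].
  assert (Hd3 : R_dist (f s) (f t) < c - f t) by (apply Hd2; repeat split; auto).
  unfold R_dist in Hd3. pose proof (Rle_abs (f s - f t)). lra.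
Qed.

Lemma continuity_pt_preimage_open (f : R -> R) (t : R) (P : R -> Prop) : continuity_pt f t ->
  (exists r, 0 < r /\ forall y, Rabs (y - f t) < r -> P y) ->
  exists d, 0 < d /\ forall s, Rabs (s - t) < d -> P (f s).
Proof.
  intros Hc [r [Hr HP]]. destruct (Hc r Hr) as [d [Hd Hd2]].
  exists d. split; auto. intros s Hs. apply HP.
  destruct (Req_dec s t) as [->|Hne]; [rewrite Rminus_diag, Rabs_R0; auto|].
  apply (Hd2 s). repeat split; auto.
Qed.

Section IncreasingInverse.

Variables (f h : R -> R) (a b : R).
Hypothesis f_incr : forall x z, a <= x -> x < z -> z <= b -> f x < f z.
Hypothesis h_inv : forall y, f a < y < f b -> a < h y < b /\ f (h y) = y.

Lemma increasing_le_interval x z : a <= z -> x <= b -> f x <= f z -> x <= z.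
Proof.
  intros Hx Hz Hf. apply Rnot_lt_le. intro Hzx.
  pose proof (f_incr z x Hx Hzx Hz). lra.
Qed.

Lemma increasing_inverse_continuity_pt y0 : f a < y0 < f b -> continuity_pt h y0.
Proof.
  intros Hy0 eps Heps. destruct (h_inv y0 Hy0) as [R0 E0]. set (x0 := h y0) in *.
  set (e := Rmin eps (Rmin (x0 - a) (b - x0)) / 2).
  pose proof (Rmin_l eps (Rmin (x0 - a) (b - x0))).
  pose proof (Rmin_r eps (Rmin (x0 - a) (b - x0))).
  pose proof (Rmin_l (x0 - a) (b - x0)). pose proof (Rmin_r (x0 - a) (b - x0)).
  assert (He : 0 < e) by (unfold e; repeat apply Rmin_glb_lt || apply Rdiv_lt_0_compat; lra).
  assert (He' : e < eps /\ e < x0 - a /\ e < b - x0) by (unfold e; lra).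
  assert (F1 : f (x0 - e) < y0) by (rewrite <- E0; apply f_incr; lra).
  assert (F2 : y0 < f (x0 + e)) by (rewrite <- E0 at 1; apply f_incr; lra).
  assert (F3 : f a < f (x0 - e)) by (apply f_incr; lra).
  assert (F4 : f (x0 + e) < f b) by (apply f_incr; lra).
  exists (Rmin (y0 - f (x0 - e)) (f (x0 + e) - y0)). split; [apply Rmin_glb_lt; lra|].
  intros y [_ Hy]. unfold R_dist in *.
  pose proof (Rmin_l (y0 - f (x0 - e)) (f (x0 + e) - y0)).
  pose proof (Rmin_r (y0 - f (x0 - e)) (f (x0 + e) - y0)).
  apply Rabs_def2 in Hy.
  destruct (h_inv y ltac:(lra)) as [Ry Ey].
  assert (x0 - e < h y).
  { apply Rnot_le_lt. intro Hle. destruct Hle as [Hlt | Heq].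
    - pose proof (f_incr (h y) (x0 - e) ltac:(lra) Hlt ltac:(lra)). lra.
    - rewrite Heq in Ey. lra. }
  assert (h y < x0 + e).
  { apply Rnot_le_lt. intro Hle. destruct Hle as [Hlt | Heq].
    - pose proof (f_incr (x0 + e) (h y) ltac:(lra) Hlt ltac:(lra)). lra.
    - rewrite <- Heq in Ey. lra. }
  apply Rabs_def1; lra.
Qed.

Lemma increasing_inverse_derive (fd : R -> R) y0 :
  (forall x, a <= x <= b -> is_derive f x (fd x) /\ 0 < fd x) ->
  f a < y0 < f b -> is_derive h y0 (1 / fd (h y0)).
Proof.
  intros Hd Hy0.
  set (lb := (f a + y0) / 2). set (ub := (y0 + f b) / 2).
  destruct (h_inv lb ltac:(unfold lb; lra)) as [Rl El].
  destruct (h_inv ub ltac:(unfold ub; lra)) as [Ru Eu].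
  destruct (h_inv y0 Hy0) as [R0 E0].
  assert (Pin : h lb <= h y0 <= h ub).
  { split; apply increasing_le_interval; try lra.
    - rewrite El, E0. unfold lb. lra.
    - rewrite Eu, E0. unfold ub. lra. }
  assert (Prf : forall x, h lb <= x <= h ub -> derivable_pt f x).
  { intros x Hx. exists (fd x). apply is_derive_Reals, Hd. lra. }
  assert (Hcomp : forall x, lb <= x <= ub -> comp f h x = id x).
  { intros x Hx. apply (h_inv x). unfold lb, ub in *. lra. }
  assert (Hder : derive_pt f (h y0) (Prf (h y0) Pin) = fd (h y0)).
  { apply derive_pt_eq_0, is_derive_Reals, Hd. lra. }
  assert (Hnz : derive_pt f (h y0) (Prf (h y0) Pin) <> 0).
  { rewrite Hder. assert (0 < fd (h y0)) by (apply Hd; lra). lra. }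
  pose proof (derivable_pt_lim_recip_interv f h lb ub y0 Prf
    (increasing_inverse_continuity_pt y0 Hy0) ltac:(unfold lb, ub; lra) ltac:(unfold lb, ub; lra)
    Pin Hcomp Hnz) as X.
  rewrite Hder in X. apply is_derive_Reals, X.
Qed.

End IncreasingInverse.

Lemma IVT_derive (f fd : R -> R) (a b y : R) : a < b ->
  (forall x, a <= x <= b -> is_derive f x (fd x)) -> f a < y < f b ->
  exists x, a < x < b /\ f x = y.
Proof.
  intros Hab Hd Hy.
  destruct (IVT_interv (fun x => f x - y) a b) as [x [Hx Ex]]; try lra.
  - intros x Hx. apply (is_derive_continuity_pt _ _ (fd x - 0)).
    apply (is_derive_minus f (fun _ => y)); [apply Hd; lra | exact (is_derive_const _ _)].
  - exists x. split; [|lra]. split; apply Rnot_le_lt; intros Hle.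
    + assert (x = a) by lra. subst. lra.
    + assert (x = b) by lra. subst. lra.
Qed.

Lemma increasing_inverse_interval (f fd : R -> R) (a b : R) : a < b ->
  (forall x, a <= x <= b -> is_derive f x (fd x) /\ 0 < fd x) ->
  exists h, (forall y, f a < y < f b ->
    a < h y < b /\ f (h y) = y /\ is_derive h y (1 / fd (h y))) /\
    (forall x, a < x < b -> h (f x) = x).
Proof.
  intros Hab Hd.
  set (h := fun y => epsilon (inhabits 0) (fun x => a < x < b /\ f x = y)).
  assert (Hh : forall y, f a < y < f b -> a < h y < b /\ f (h y) = y).
  { intros y Hy. apply (epsilon_spec (inhabits 0) (fun x => a < x < b /\ f x = y)).
    apply (IVT_derive f fd); auto. intros x Hx; apply Hd, Hx. }
  pose proof (derive_pos_increasing f fd a b (fun x Hx => proj1 (Hd x Hx))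
    (fun x Hx => proj2 (Hd x ltac:(lra)))) as Hs.
  exists h. split.
  - intros y Hy. split; [apply Hh, Hy | split; [apply Hh, Hy|]].
    apply (increasing_inverse_derive f h a b); auto.
  - intros x Hx. destruct (Hh (f x)) as [Hr E]; [split; apply Hs; lra|].
    destruct (Rtotal_order (h (f x)) x) as [Hlt|[Heq|Hgt]]; auto;
      [pose proof (Hs (h (f x)) x ltac:(lra) Hlt ltac:(lra))
      | pose proof (Hs x (h (f x)) ltac:(lra) Hgt ltac:(lra))]; lra.
Qed.

Lemma increasing_inverse_global (f fd : R -> R) :
  (forall x, is_derive f x (fd x) /\ 0 < fd x) ->
  (forall y, exists a b, f a < y < f b) ->
  exists h, forall y, f (h y) = y /\ is_derive h y (1 / fd (h y)).
Proof.
  intros Hd Hsurj.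
  assert (Hs : forall x z, x < z -> f x < f z).
  { intros x z Hxz. apply (derive_pos_increasing f fd x z); try lra; intros; apply Hd. }
  set (h := fun y => epsilon (inhabits 0) (fun x => f x = y)).
  assert (Hh : forall y, f (h y) = y).
  { intros y. apply (epsilon_spec (inhabits 0) (fun x => f x = y)).
    destruct (Hsurj y) as [a [b Hy]].
    assert (a < b).
    { destruct (Rtotal_order a b) as [|[->|Hba]]; [auto | lra | pose proof (Hs b a Hba); lra]. }
    destruct (IVT_derive f fd a b y) as [x [_ Ex]]; auto.
    - intros x _; apply Hd.
    - now exists x. }
  exists h. intros y. split; auto.
  destruct (Hsurj y) as [a [b Hy]].
  assert (Hmono : forall x z, x <= z -> f x <= f z).
  { intros x z [Hxz | ->]; [left; auto | lra]. }
  apply (increasing_inverse_derive f h a b).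
  - intros x z _ Hxz _. auto.
  - intros y' Hy'. split; auto.
    split; apply Rnot_le_lt; intros H; apply Hmono in H; rewrite Hh in H; lra.
  - intros x _; apply Hd.
  - exact Hy.
Qed.

Lemma gronwall_zero_forward (E dE : R -> R) (C : R) :
  (forall t, is_derive E t (dE t)) -> (forall t, 0 <= E t) ->
  (forall t, Rabs (dE t) <= C * E t) -> E 0 = 0 -> forall t, 0 <= t -> E t = 0.
Proof.
  intros D Hpos Hb E0 t Ht. apply Rle_antisym; [|apply Hpos].
  (* [E t * exp (- C t)] is nonincreasing *)
  pose proof (derive_nonpos_le (fun s => E s * exp (- C * s))
    (fun s => dE s * exp (- C * s) + E s * (- C * 1 * exp (- C * s))) 0 t Ht) as X.
  cbv beta in X. rewrite E0, Rmult_0_l in X.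
  enough (E t * exp (- C * t) <= 0) by (pose proof (exp_pos (- C * t)); nra).
  apply X. intros s _. split.
  - apply (Derive.is_derive_mult E (fun s => exp (- C * s))); [apply D|].
    apply (is_derive_comp exp (fun s => - C * s)); [apply is_derive_exp|].
    apply (is_derive_scal (fun s => s)). exact (is_derive_id _).
  - pose proof (Rle_abs (dE s)). pose proof (Hb s). pose proof (exp_pos (- C * s)). nra.
Qed.

Lemma gronwall_zero (E dE : R -> R) (C : R) :
  (forall t, is_derive E t (dE t)) -> (forall t, 0 <= E t) ->
  (forall t, Rabs (dE t) <= C * E t) -> E 0 = 0 -> forall t, E t = 0.
Proof.
  intros D Hpos Hb E0 t. destruct (Rle_dec 0 t) as [Ht|Ht].
  - apply (gronwall_zero_forward E dE C); auto.
  - rewrite <- (Ropp_involutive t).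
    apply (gronwall_zero_forward (fun s => E (- s)) (fun s => -1 * dE (- s)) C); try lra.
    + intros s. apply (is_derive_comp E (fun s => - s)); [apply D | auto_derive; [auto | ring]].
    + intros s. apply Hpos.
    + intros s. rewrite Rabs_mult, (Rabs_left (-1)) by lra. pose proof (Hb (- s)). lra.
    + rewrite Ropp_0. exact E0.
Qed.

Lemma energy_derivative_bound (d e l M : R) : 0 <= M -> Rabs l <= M * Rabs d ->
  Rabs (4 * d * e + 2 * e * l) <= (2 + M) * (d ^ 2 + e ^ 2).
Proof.
  intros HM Hl.
  assert (T : Rabs (4 * d * e + 2 * e * l) <= 4 * Rabs d * Rabs e + 2 * Rabs e * Rabs l).
  { eapply Rle_trans; [apply Rabs_triang|]. rewrite !Rabs_mult.
    rewrite (Rabs_pos_eq 4), (Rabs_pos_eq 2) by lra. lra. }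
  pose proof (Rabs_pos d). pose proof (Rabs_pos e).
  assert (2 * Rabs e * Rabs l <= 2 * Rabs e * (M * Rabs d)) by (apply Rmult_le_compat_l; nra).
  assert (Hde : 2 * Rabs d * Rabs e <= d ^ 2 + e ^ 2).
  { rewrite <- (pow2_abs d), <- (pow2_abs e). pose proof (pow2_ge_0 (Rabs d - Rabs e)). nra. }
  assert ((2 + M) * (2 * Rabs d * Rabs e) <= (2 + M) * (d ^ 2 + e ^ 2))
    by (apply Rmult_le_compat_l; lra).
  lra.
Qed.

Lemma hamiltonian_unique (g : R -> R) (p q M : R) (u w u1 w1 : R -> R) : 0 <= M ->
  (forall x y, p <= x <= q -> p <= y <= q -> Rabs (g x - g y) <= M * Rabs (x - y)) ->
  (forall t, is_derive u t (2 * w t) /\ is_derive w t (g (u t)) /\ p <= u t <= q) ->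
  (forall t, is_derive u1 t (2 * w1 t) /\ is_derive w1 t (g (u1 t)) /\ p <= u1 t <= q) ->
  u1 0 = u 0 -> w1 0 = w 0 -> forall t, u1 t = u t /\ w1 t = w t.
Proof.
  intros HM Lip Hsol Hsol1 Hu0 Hw0.
  set (E := fun t => (u1 t - u t) ^ 2 + (w1 t - w t) ^ 2).
  set (dE := fun t => 2 * (u1 t - u t) * (2 * w1 t - 2 * w t) +
                      2 * (w1 t - w t) * (g (u1 t) - g (u t))).
  assert (E0 : forall t, E t = 0).
  { apply (gronwall_zero E dE (2 + M)).
    - intros t. destruct (Hsol t) as [Du [Dw _]]. destruct (Hsol1 t) as [Du1 [Dw1 _]].
      unfold E, dE. apply (is_derive_eq _ _
        (INR 2 * (2 * w1 t - 2 * w t) * (u1 t - u t) ^ 1 +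
         INR 2 * (g (u1 t) - g (u t)) * (w1 t - w t) ^ 1)); [|simpl; ring].
      apply (is_derive_plus (fun t => (u1 t - u t) ^ 2) (fun t => (w1 t - w t) ^ 2)).
      + apply (is_derive_pow (fun t => u1 t - u t)), (is_derive_minus u1 u); auto.
      + apply (is_derive_pow (fun t => w1 t - w t)), (is_derive_minus w1 w); auto.
    - intros t. unfold E. pose proof (pow2_ge_0 (u1 t - u t)). pose proof (pow2_ge_0 (w1 t - w t)).
      lra.
    - intros t. unfold dE, E.
      destruct (Hsol t) as [_ [_ Hut]]. destruct (Hsol1 t) as [_ [_ Hu1t]].
      pose proof (Lip (u1 t) (u t) Hu1t Hut) as Hl.
      set (d := u1 t - u t) in *. set (e := w1 t - w t) in *.
      set (l := g (u1 t) - g (u t)) in *.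
      replace (2 * d * (2 * w1 t - 2 * w t)) with (4 * d * e) by (unfold e; ring).
      apply energy_derivative_bound; auto.
    - unfold E. rewrite Hu0, Hw0. ring. }
  intros t. pose proof (E0 t) as Et. unfold E in Et.
  pose proof (pow2_ge_0 (u1 t - u t)). pose proof (pow2_ge_0 (w1 t - w t)).
  split; apply Rminus_diag_uniq, Rsqr_0_uniq; rewrite Rsqr_pow2; lra.
Qed.

(** * Polynomial functions *)

Inductive polyfun : (R -> R) -> Prop :=
| polyfun_const c : polyfun (fun _ => c)
| polyfun_id : polyfun (fun x => x)
| polyfun_add f g : polyfun f -> polyfun g -> polyfun (fun x => f x + g x)
| polyfun_mul f g : polyfun f -> polyfun g -> polyfun (fun x => f x * g x).

Lemma polyfun_affine (k l : R) : polyfun (fun x => k * x + l).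
Proof. apply polyfun_add; [apply polyfun_mul|]; constructor. Qed.

Lemma polyfun_derive (f : R -> R) : polyfun f ->
  exists f', polyfun f' /\ forall x, is_derive f x (f' x).
Proof.
  induction 1 as [c | | f g _ [f' [Pf Df]] _ [g' [Pg Dg]] | f g Hf [f' [Pf Df]] Hg [g' [Pg Dg]]].
  - exists (fun _ => 0). split; [constructor | intros; exact (is_derive_const _ _)].
  - exists (fun _ => 1). split; [constructor | intros; exact (is_derive_id _)].
  - exists (fun x => f' x + g' x). split; [constructor; auto|].
    intros x. apply (is_derive_plus f g); auto.
  - exists (fun x => f' x * g x + f x * g' x). split; [repeat constructor; auto|].
    intros x. apply Derive.is_derive_mult; auto.
Qed.

Lemma polyfun_continuity_pt (f : R -> R) (x : R) : polyfun f -> continuity_pt f x.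
Proof.
  intros H. destruct (polyfun_derive f H) as [f' [_ D]].
  apply (is_derive_continuity_pt f x (f' x)), D.
Qed.

Lemma polyfun_lipschitz (f : R -> R) (p q : R) : polyfun f -> p <= q ->
  exists M, 0 <= M /\ forall x y, p <= x <= q -> p <= y <= q ->
    Rabs (f x - f y) <= M * Rabs (x - y).
Proof.
  intros Pf Hpq.
  destruct (polyfun_derive f Pf) as [f' [Pf' Df]].
  destruct (continuity_ab_maj (fun x => Rabs (f' x)) p q Hpq) as [xM [HM _]].
  { intros x _. apply (continuity_pt_comp f' Rabs);
      [apply polyfun_continuity_pt, Pf' | apply Rcontinuity_abs]. }
  exists (Rabs (f' xM)). split; [apply Rabs_pos|].
  assert (Hlt : forall x y, p <= x <= q -> p <= y <= q -> y < x ->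
            Rabs (f x - f y) <= Rabs (f' xM) * Rabs (x - y)).
  { intros x y Hx Hy Hyx.
    destruct (MVT_interval f f' y x Hyx) as [z [Hz E]]; [intros; apply Df|].
    rewrite E, Rabs_mult. apply Rmult_le_compat_r; [apply Rabs_pos | apply HM; lra]. }
  intros x y Hx Hy. destruct (Rtotal_order y x) as [Hyx|[->|Hxy]]; auto.
  - rewrite !Rminus_diag, !Rabs_R0. lra.
  - rewrite <- (Rabs_Ropp (f x - f y)), <- (Rabs_Ropp (x - y)), !Ropp_minus_distr. auto.
Qed.

Lemma polyfun_factor (f : R -> R) (c : R) : polyfun f ->
  exists g, polyfun g /\ forall x, f x = f c + (x - c) * g x.
Proof.
  induction 1 as [k | | f g _ [q1 [P1 E1]] _ [q2 [P2 E2]] | f g _ [q1 [P1 E1]] Hg [q2 [P2 E2]]].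
  - exists (fun _ => 0). split; [constructor | intros; ring].
  - exists (fun _ => 1). split; [constructor | intros; ring].
  - exists (fun x => q1 x + q2 x). split; [constructor; auto|].
    intros x. rewrite (E1 x), (E2 x). ring.
  - exists (fun x => q1 x * g x + f c * q2 x). split; [repeat constructor; auto|].
    intros x. rewrite (E1 x) at 1. rewrite (E2 x) at 1. rewrite (E2 x). ring.
Qed.

Lemma polyfun_double_root (f : R -> R) (c : R) : polyfun f -> is_derive f c 0 ->
  exists K, polyfun K /\ forall x, f x = f c - (x - c) ^ 2 * K x.
Proof.
  intros Pf Dc.
  destruct (polyfun_factor f c Pf) as [g [Pg Eg]].
  destruct (polyfun_factor g c Pg) as [h [Ph Eh]].
  assert (gc : g c = 0).
  { destruct (polyfun_derive g Pg) as [g' [_ Dg]].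
    assert (D : is_derive f c (0 + (1 * g c + (c - c) * g' c))).
    { apply (is_derive_ext (fun x => f c + (x - c) * g x));
        [intros t; rewrite (Eg t); reflexivity|].
      apply (is_derive_plus (fun _ => f c)); [exact (is_derive_const _ _)|].
      apply (Derive.is_derive_mult (fun x => x - c) g); [apply is_derive_shift | apply Dg]. }
    pose proof (is_derive_unique _ _ _ Dc) as E0. rewrite (is_derive_unique _ _ _ D) in E0.
    lra. }
  exists (fun x => -1 * h x). split; [apply (polyfun_mul (fun _ => -1)); [constructor | auto]|].
  intros x. rewrite (Eg x), (Eh x), gc. ring.
Qed.

Section DoubleRoot.

Variables (f K Kd : R -> R) (c fc : R).
Hypothesis f_eq : forall x, f x = fc - (x - c) ^ 2 * K x.
Hypothesis K_derive : forall x, is_derive K x (Kd x).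

Lemma double_root_derive x : is_derive f x (- (2 * (x - c) * K x + (x - c) ^ 2 * Kd x)).
Proof.
  apply (is_derive_ext (fun x => fc - (x - c) ^ 2 * K x)); [intros t; symmetry; apply f_eq|].
  auto_derive; [exists (Kd x); apply K_derive|].
  replace (Derive (fun y : R => K y) x) with (Kd x) by (symmetry; apply is_derive_unique, K_derive).
  ring.
Qed.

Lemma double_root_second_derive (fd : R -> R) (l : R) :
  (forall x, is_derive f x (fd x)) -> ex_derive Kd c ->
  is_derive fd c l -> l = - 2 * K c.
Proof.
  intros Df DKd Dc.
  assert (Efd : forall x, fd x = - (2 * (x - c) * K x + (x - c) ^ 2 * Kd x)).
  { intros x. rewrite <- (is_derive_unique _ _ _ (Df x)).
    apply is_derive_unique, double_root_derive. }
  assert (D : is_derive fd c (- (2 * K c))).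
  { apply (is_derive_ext (fun x => - (2 * (x - c) * K x + (x - c) ^ 2 * Kd x)));
      [intros t; symmetry; apply Efd|].
    auto_derive; [|ring].
    repeat split; auto. exists (Kd c); apply K_derive. }
  rewrite <- (is_derive_unique _ _ _ Dc), (is_derive_unique _ _ _ D). ring.
Qed.

Definition gap_root (x : R) : R := (x - c) * sqrt (K x).

Definition gap_root_d (x : R) : R := sqrt (K x) + (x - c) * Kd x / (2 * sqrt (K x)).

Lemma gap_root_sqr x : 0 <= K x -> gap_root x ^ 2 = fc - f x.
Proof. intros HK. unfold gap_root. rewrite f_eq, Rpow_mult_distr, pow2_sqrt by exact HK. ring. Qed.

Lemma gap_root_derive x : 0 < K x -> is_derive gap_root x (gap_root_d x).
Proof.
  intros HK. pose proof (sqrt_lt_R0 _ HK).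
  apply (is_derive_eq _ _ (1 * sqrt (K x) + (x - c) * (Kd x / (2 * sqrt (K x))))).
  - apply (Derive.is_derive_mult (fun t => t - c) (fun t => sqrt (K t))); [apply is_derive_shift|].
    apply is_derive_sqrt; [apply K_derive | exact HK].
  - unfold gap_root_d. field. lra.
Qed.

Lemma gap_root_mul_d x (l : R) : 0 < K x -> is_derive f x l -> gap_root x * gap_root_d x = - l / 2.
Proof.
  intros HK Dl. pose proof (sqrt_lt_R0 _ HK). pose proof (sqrt_sqrt _ (Rlt_le _ _ HK)).
  apply is_derive_unique in Dl. rewrite (is_derive_unique _ _ _ (double_root_derive x)) in Dl.
  rewrite <- Dl. unfold gap_root, gap_root_d. field_simplify; [|lra].
  rewrite pow2_sqrt by lra. field.
Qed.

Lemma gap_root_d_pos x (l : R) : 0 < K x -> is_derive f x l -> (x = c \/ (x - c) * l < 0) ->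
  0 < gap_root_d x.
Proof.
  intros HK Dl Hs. pose proof (sqrt_lt_R0 _ HK).
  destruct Hs as [-> | Hs]; [unfold gap_root_d; rewrite Rminus_diag, Rmult_0_l; unfold Rdiv; lra|].
  pose proof (gap_root_mul_d x l HK Dl) as E. unfold gap_root in E.
  assert (E' : (x - c) ^ 2 * sqrt (K x) * gap_root_d x = - ((x - c) * l) / 2)
    by (transitivity ((x - c) * ((x - c) * sqrt (K x) * gap_root_d x)); [ring | rewrite E; field]).
  assert (0 < (x - c) ^ 2) by (apply pow2_gt_0; intros Hx; rewrite Hx, Rmult_0_l in Hs; lra).
  assert (0 < (x - c) ^ 2 * sqrt (K x)) by (apply Rmult_lt_0_compat; auto).
  nra.
Qed.

Lemma gap_root_d_continuity_pt x : 0 < K x -> continuity_pt Kd x -> continuity_pt gap_root_d x.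
Proof.
  intros HK Hkd. pose proof (sqrt_lt_R0 _ HK).
  assert (CS : continuity_pt (fun t => sqrt (K t)) x).
  { apply (continuity_pt_comp K sqrt x); [apply (is_derive_continuity_pt _ _ _ (K_derive x))|].
    apply continuity_pt_sqrt; lra. }
  apply (continuity_pt_plus (fun t => sqrt (K t))
    (fun t => (t - c) * Kd t / (2 * sqrt (K t)))); auto.
  apply (continuity_pt_div (fun t => (t - c) * Kd t) (fun t => 2 * sqrt (K t))); [| |lra].
  - apply (continuity_pt_mult (fun t => t - c) Kd); auto.
    apply (is_derive_continuity_pt _ _ 1), is_derive_shift.
  - apply (continuity_pt_scal (fun t => sqrt (K t)) 2), CS.
Qed.

End DoubleRoot.

(** * Angles and periodic orbits of level sets *)

Lemma cos_plus_2PI (x : R) : cos (x + 2 * PI) = cos x.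
Proof. rewrite cos_plus, cos_2PI, sin_2PI; ring. Qed.

Lemma sin_plus_2PI (x : R) : sin (x + 2 * PI) = sin x.
Proof. rewrite sin_plus, cos_2PI, sin_2PI; ring. Qed.

Lemma polar_coordinates (x y r : R) : 0 < r -> x ^ 2 + y ^ 2 = r ^ 2 ->
  exists b, x = r * cos b /\ y = r * sin b.
Proof.
  intros Hr E. set (z := x / r).
  assert (Ezr : z * r = x) by (unfold z; field; lra).
  assert (Hz2 : z ^ 2 <= 1).
  { apply Rmult_le_reg_r with (r ^ 2); [nra|].
    replace (z ^ 2 * r ^ 2) with (x ^ 2) by (rewrite <- Ezr; ring). nra. }
  assert (Hz : -1 <= z <= 1) by (split; nra).
  assert (Hs : sqrt (1 - z ^ 2) = Rabs y / r).
  { replace (1 - z ^ 2) with ((Rabs y / r) ^ 2).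
    - apply sqrt_pow2. apply Rmult_le_pos; [apply Rabs_pos | left; apply Rinv_0_lt_compat; auto].
    - replace ((Rabs y / r) ^ 2) with (Rabs y ^ 2 / r ^ 2) by (field; lra).
      rewrite pow2_abs. unfold z. replace ((x / r) ^ 2) with (x ^ 2 / r ^ 2) by (field; lra).
      replace (y ^ 2) with (r ^ 2 - x ^ 2) by lra. field. lra. }
  assert (Hx : x = r * cos (acos z)) by (rewrite cos_acos; auto; unfold z; field; lra).
  assert (Hsin : sin (acos z) = Rabs y / r).
  { rewrite sin_acos by auto. rewrite <- Hs. f_equal. unfold Rsqr; ring. }
  destruct (Rle_dec 0 y).
  - exists (acos z). split; auto. rewrite Hsin, Rabs_pos_eq; auto. field; lra.
  - exists (- acos z). rewrite cos_neg, sin_neg, Hsin, Rabs_left by lra. split; auto. field; lra.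
Qed.

Lemma sqrt_polar_sqr (r x : R) : 0 <= r -> (sqrt r * cos x) ^ 2 + (sqrt r * sin x) ^ 2 = r.
Proof.
  intros Hr. rewrite !Rpow_mult_distr, pow2_sqrt by exact Hr.
  pose proof (sin2_cos2 x) as SC. rewrite !Rsqr_pow2 in SC.
  transitivity (r * (sin x ^ 2 + cos x ^ 2)); [ring | rewrite SC; ring].
Qed.

Lemma sqrt_mul_sin_sqr_le (r x : R) : 0 <= r -> (sqrt r * sin x) ^ 2 <= r.
Proof.
  intros Hr. pose proof (sqrt_polar_sqr r x Hr). pose proof (pow2_ge_0 (sqrt r * cos x)). lra.
Qed.

Lemma atan_polar (A w : R) : 0 < A ->
  sqrt (A ^ 2 + w ^ 2) * cos (atan (w / A)) = A /\ sqrt (A ^ 2 + w ^ 2) * sin (atan (w / A)) = w.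
Proof.
  intros HA. set (s := sqrt (A ^ 2 + w ^ 2)).
  assert (Hs : 0 < s) by (apply sqrt_lt_R0; nra).
  assert (Hs2 : s ^ 2 = A ^ 2 + w ^ 2) by (apply pow2_sqrt; nra).
  assert (E : sqrt (1 + (w / A)²) = s / A).
  { rewrite Rsqr_pow2. replace (1 + (w / A) ^ 2) with ((s / A) ^ 2).
    - apply sqrt_pow2. left; apply Rdiv_lt_0_compat; auto.
    - replace ((s / A) ^ 2) with (s ^ 2 / A ^ 2) by (field; lra). rewrite Hs2. field; lra. }
  rewrite cos_atan, sin_atan, E. split; field; lra.
Qed.

Lemma polar_angle (A th0 : R) (w wd : R -> R) : 0 < A -> (forall t, is_derive w t (wd t)) ->
  sqrt (A ^ 2 + w 0 ^ 2) * cos th0 = w 0 -> sqrt (A ^ 2 + w 0 ^ 2) * sin th0 = A ->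
  exists th : R -> R, th 0 = th0 /\ (forall t s, th t = th s <-> w t = w s) /\
    forall t, sqrt (A ^ 2 + w t ^ 2) * cos (th t) = w t /\
      sqrt (A ^ 2 + w t ^ 2) * sin (th t) = A /\
      is_derive th t (- A * wd t / (A ^ 2 + w t ^ 2)).
Proof.
  intros HA Dw Hc0 Hs0.
  (* [th0 + atan (w 0 / A)] is congruent to [PI / 2] *)
  set (g0 := atan (w 0 / A)).
  assert (Eg0 : cos th0 = sin g0 /\ sin th0 = cos g0).
  { destruct (atan_polar A (w 0) HA) as [C S]. fold g0 in C, S.
    assert (0 < sqrt (A ^ 2 + w 0 ^ 2)) by (apply sqrt_lt_R0; nra).
    split; apply (Rmult_eq_reg_l (sqrt (A ^ 2 + w 0 ^ 2))); lra. }
  exists (fun t => th0 + g0 - atan (w t / A)). split; [|split].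
  - unfold g0. ring.
  - intros t s. split; intros E; [|rewrite E; reflexivity].
    assert (Ea : atan (w t / A) = atan (w s / A)) by lra.
    destruct (Rtotal_order (w t / A) (w s / A)) as [Hlt|[Heq|Hgt]].
    + pose proof (atan_increasing _ _ Hlt). lra.
    + apply (Rmult_eq_reg_r (/ A)); [exact Heq | apply Rinv_neq_0_compat; lra].
    + pose proof (atan_increasing _ _ Hgt). lra.
  - intros t. destruct (atan_polar A (w t) HA) as [C S].
    destruct Eg0 as [E1 E2].
    rewrite cos_minus, sin_minus, cos_plus, sin_plus, E1, E2.
    pose proof (sin2_cos2 g0) as SC. unfold Rsqr in SC.
    split; [|split].
    + transitivity ((sin g0 * sin g0 + cos g0 * cos g0) *
        (sqrt (A ^ 2 + w t ^ 2) * sin (atan (w t / A)))); [ring | rewrite SC, S; ring].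
    + transitivity ((sin g0 * sin g0 + cos g0 * cos g0) *
        (sqrt (A ^ 2 + w t ^ 2) * cos (atan (w t / A)))); [ring | rewrite SC, C; ring].
    + apply (is_derive_eq _ _ (0 - (/ A * wd t) * / (1 + (w t / A) ²))).
      * apply (is_derive_minus (fun _ => th0 + g0) (fun t => atan (w t / A)));
          [exact (is_derive_const _ _)|].
        apply (is_derive_comp atan (fun t => w t / A)); [apply is_derive_atan|].
        apply (is_derive_ext (fun t => / A * w t)); [intros t'; apply Rmult_comm|].
        apply (is_derive_scal w), Dw.
      * rewrite Rsqr_pow2. field. split; [nra | lra].
Qed.

Lemma periodic_increment_unbounded (f : R -> R) (omega P : R) : 0 < P ->
  (forall b, f (b + omega) = f b + P) -> forall y, exists a b, f a < y < f b.
Proof.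
  intros HP Per y.
  assert (Mult : forall n : nat, f (INR n * omega) = f 0 + INR n * P /\
                                 f (- INR n * omega) = f 0 - INR n * P).
  { induction n as [|n [IH1 IH2]].
    - change (INR 0) with 0. replace (0 * omega) with 0 by ring.
      replace (- 0 * omega) with 0 by ring. split; ring.
    - rewrite S_INR. split.
      + replace ((INR n + 1) * omega) with (INR n * omega + omega) by ring.
        rewrite Per, IH1. ring.
      + pose proof (Per (- (INR n + 1) * omega)) as E.
        replace (- (INR n + 1) * omega + omega) with (- INR n * omega) in E by ring.
        rewrite IH2 in E. lra. }
  destruct (INR_unbounded (Rabs (y - f 0) / P)) as [n Hn].
  assert (HnP : INR n * P > Rabs (y - f 0)).
  { apply (Rmult_gt_compat_r P) in Hn; auto. unfold Rdiv in Hn.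
    rewrite Rmult_assoc, Rinv_l, Rmult_1_r in Hn; lra. }
  exists (- INR n * omega), (INR n * omega). destruct (Mult n) as [M1 M2]. rewrite M1, M2.
  apply Rabs_def2 in HnP. lra.
Qed.

Lemma angle_flow (G : R -> R) (omega b0 : R) : 0 < omega ->
  (forall b, continuous G b) -> (forall b, 0 < G b) -> (forall b, G (b + omega) = G b) ->
  exists (B : R -> R) (P : R), 0 < P /\ B 0 = b0 /\
    (forall t, is_derive B t (G (B t))) /\ (forall t, B (t + P) = B t + omega) /\
    (forall b, exists t, B t = b).
Proof.
  intros Homega Gc Gpos Gper.
  (* [B] is the inverse of the time [tau b] needed to reach the angle [b] from [b0] *)
  set (ig := fun b => / G b).
  assert (igc : forall b, continuous ig b).
  { intros b. apply continuity_pt_filterlim, continuity_pt_inv;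
      [apply continuity_pt_filterlim, Gc | apply Rgt_not_eq, Gpos]. }
  set (tau := (fun b => RInt ig b0 b) : R -> R).
  assert (taud : forall b, is_derive tau b (ig b) /\ 0 < ig b).
  { intros b. split; [apply RInt_primitive_derive, igc | apply Rinv_0_lt_compat, Gpos]. }
  assert (tau0 : tau b0 = 0) by exact (RInt_point b0 ig).
  assert (taus : forall x z, x < z -> tau x < tau z).
  { intros x z Hxz. apply (derive_pos_increasing tau ig x z); try lra; intros; apply taud. }
  assert (tauinj : forall x z, tau x = tau z -> x = z).
  { intros x z E. destruct (Rtotal_order x z) as [Hlt|[Heq|Hgt]]; auto;
      [pose proof (taus x z Hlt) | pose proof (taus z x Hgt)]; lra. }
  set (P := tau omega - tau 0).
  assert (HP : 0 < P) by (pose proof (taus 0 omega Homega); unfold P; lra).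
  assert (Per : forall b, tau (b + omega) = tau b + P).
  { apply (derive_periodic_increment tau ig);
      [apply taud | intros; unfold ig; rewrite Gper; auto]. }
  destruct (increasing_inverse_global tau ig taud
    (periodic_increment_unbounded tau omega P HP Per)) as [B HB].
  assert (Btau : forall x, B (tau x) = x) by (intros; apply tauinj, HB).
  exists B, P. split; [exact HP|]. split; [|split; [|split]].
  - rewrite <- tau0. apply Btau.
  - intros t. destruct (HB t) as [_ D]. apply (is_derive_eq _ _ _ _ D).
    unfold ig. pose proof (Gpos (B t)). field. lra.
  - intros t. apply tauinj. rewrite Per, (proj1 (HB (t + P))), (proj1 (HB t)). reflexivity.
  - intros b. exists (tau b). apply Btau.
Qed.

Section LevelSetFlow.

Variables (V Vd U : R -> R) (p q rho : R).
Hypothesis rho_pos : 0 < rho.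
Hypothesis U_param : forall y, - rho <= y <= rho ->
  p < U y < q /\ V (U y) = y /\ is_derive U y (1 / Vd (U y)).
Hypothesis Vd_pos : forall x, p < x < q -> 0 < Vd x.
Hypothesis Vd_continuity : forall x, p < x < q -> continuity_pt Vd x.

(* The orbit is [V u = rho cos b, w = - rho sin b], along which [b' = orbit_speed b]. *)
Definition orbit_speed (b : R) : R := 2 * Vd (U (rho * cos b)).

Lemma U_param_cos (b : R) : p < U (rho * cos b) < q /\ V (U (rho * cos b)) = rho * cos b /\
  is_derive U (rho * cos b) (1 / Vd (U (rho * cos b))).
Proof.
  apply U_param. destruct (COS_bound b) as [H1 H2].
  pose proof (Rmult_le_compat_l rho _ _ (Rlt_le _ _ rho_pos) H1).
  pose proof (Rmult_le_compat_l rho _ _ (Rlt_le _ _ rho_pos) H2). lra.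
Qed.

Lemma orbit_speed_pos (b : R) : 0 < orbit_speed b.
Proof. unfold orbit_speed. pose proof (Vd_pos _ (proj1 (U_param_cos b))). lra. Qed.

Lemma orbit_speed_continuous (b : R) : continuous orbit_speed b.
Proof.
  destruct (U_param_cos b) as [Hr [_ DU]]. apply continuity_pt_filterlim.
  apply (continuity_pt_comp (fun b => U (rho * cos b)) (fun y => 2 * Vd y)).
  - apply (continuity_pt_comp (fun b => rho * cos b) U);
      [|exact (is_derive_continuity_pt _ _ _ DU)].
    apply (is_derive_continuity_pt _ _ (rho * - sin b)). auto_derive; [auto | ring].
  - apply (continuity_pt_scal Vd 2), Vd_continuity, Hr.
Qed.

Lemma orbit_derive (B : R -> R) (t : R) : is_derive B t (orbit_speed (B t)) ->
  is_derive (fun t => U (rho * cos (B t))) t (2 * (- rho * sin (B t))) /\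
  is_derive (fun t => - rho * sin (B t)) t
    (- 2 * V (U (rho * cos (B t))) * Vd (U (rho * cos (B t)))).
Proof.
  intros DB. destruct (U_param_cos (B t)) as [Hr [E DU]].
  pose proof (Vd_pos _ Hr). unfold orbit_speed in DB. split.
  - apply (is_derive_eq _ _
      (orbit_speed (B t) * (rho * - sin (B t)) * (1 / Vd (U (rho * cos (B t)))))).
    + apply (is_derive_comp U (fun t => rho * cos (B t))); [exact DU|].
      apply (is_derive_comp (fun x => rho * cos x) B); [|exact DB].
      apply (is_derive_scal cos), is_derive_cos.
    + unfold orbit_speed. field. lra.
  - apply (is_derive_eq _ _ (orbit_speed (B t) * (- rho * cos (B t)))).
    + apply (is_derive_comp (fun x => - rho * sin x) B); [|exact DB].
      apply (is_derive_scal sin), is_derive_sin.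
    + unfold orbit_speed. rewrite E. ring.
Qed.

Lemma level_set_orbit (u0 w0 : R) : U (V u0) = u0 -> V u0 ^ 2 + w0 ^ 2 = rho ^ 2 ->
  exists (u w : R -> R) (P : R), 0 < P /\
    (forall t, is_derive u t (2 * w t) /\ is_derive w t (- 2 * V (u t) * Vd (u t)) /\
       p < u t < q /\ V (u t) ^ 2 + w t ^ 2 = rho ^ 2 /\
       u (t + P) = u t /\ w (t + P) = w t) /\
    u 0 = u0 /\ w 0 = w0 /\ (exists t1 t2, u t1 <> u t2) /\ (exists t1 t2, w t1 <> w t2).
Proof.
  intros UV Hw0.
  destruct (polar_coordinates (V u0) (- w0) rho rho_pos) as [b0 [Eb1 Eb2]]; [lra|].
  destruct (angle_flow orbit_speed (2 * PI) b0) as [B [P [HP [B0 [BD [BP Bsurj]]]]]].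
  { pose proof PI_RGT_0. lra. }
  { exact orbit_speed_continuous. }
  { exact orbit_speed_pos. }
  { intros b. unfold orbit_speed. rewrite cos_plus_2PI. reflexivity. }
  exists (fun t => U (rho * cos (B t))), (fun t => - rho * sin (B t)), P.
  split; [exact HP|]. split; [|split; [|split; [|split]]].
  - intros t. destruct (U_param_cos (B t)) as [Hr [E _]].
    destruct (orbit_derive B t (BD t)) as [Du Dw].
    split; [exact Du | split; [exact Dw | split; [exact Hr | split; [|split]]]].
    + rewrite E. pose proof (sin2_cos2 (B t)). unfold Rsqr in *. nra.
    + rewrite BP, cos_plus_2PI. reflexivity.
    + rewrite BP, sin_plus_2PI. reflexivity.
  - rewrite B0, <- Eb1. exact UV.
  - rewrite B0. lra.
  - destruct (Bsurj 0) as [t1 E1]. destruct (Bsurj PI) as [t2 E2].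
    exists t1, t2. rewrite E1, E2. intros E.
    pose proof (proj1 (proj2 (U_param_cos 0))) as V1.
    pose proof (proj1 (proj2 (U_param_cos PI))) as V2.
    rewrite E, V2, cos_PI, cos_0 in V1. lra.
  - destruct (Bsurj (PI / 2)) as [t1 E1]. destruct (Bsurj (- (PI / 2))) as [t2 E2].
    exists t1, t2. rewrite E1, E2, sin_neg, sin_PI2. lra.
Qed.

End LevelSetFlow.

Lemma level_set_flow (V Vd : R -> R) (p q rho u0 w0 : R) :
  p < q -> 0 < rho ->
  (forall x, p <= x <= q -> is_derive V x (Vd x) /\ 0 < Vd x) ->
  (forall x, p <= x <= q -> continuity_pt Vd x) ->
  V p < - rho -> rho < V q -> p < u0 < q -> V u0 ^ 2 + w0 ^ 2 = rho ^ 2 ->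
  exists (u w : R -> R) (P : R), 0 < P /\
    (forall t, is_derive u t (2 * w t) /\ is_derive w t (- 2 * V (u t) * Vd (u t)) /\
       p < u t < q /\ V (u t) ^ 2 + w t ^ 2 = rho ^ 2 /\
       u (t + P) = u t /\ w (t + P) = w t) /\
    u 0 = u0 /\ w 0 = w0 /\ (exists t1 t2, u t1 <> u t2) /\ (exists t1 t2, w t1 <> w t2).
Proof.
  intros Hpq Hrho VD Vdc Vp Vq Hu0 Hw0.
  destruct (increasing_inverse_interval V Vd p q Hpq VD) as [U [HU UV]].
  apply (level_set_orbit V Vd U p q rho Hrho); auto.
  - intros y Hy. apply HU. lra.
  - intros x Hx. apply VD. lra.
  - intros x Hx. apply Vdc. lra.
Qed.

(** * The product Q and the sums S_k *)

(* [QL a L] and [SL k a L] are [Q] and [S k] with the index range [seq 0 m] replaced by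
   an arbitrary list, so that [Q a m = QL a (seq 0 m)] holds by conversion. *)
Definition QL (a : nat -> Z) (L : list nat) (u : R) : R :=
  fold_right Rmult 1 (map (fun j => IZR (a j) * u + 1) L).

Definition SL (k : nat) (a : nat -> Z) (L : list nat) (u : R) : R :=
  fold_right Rplus 0 (map (fun j => IZR (a j) ^ k / (IZR (a j) * u + 1)) L).

Definition SLsq (a : nat -> Z) (L : list nat) (u : R) : R :=
  fold_right Rplus 0 (map (fun j => IZR (a j) ^ 2 / (IZR (a j) * u + 1) ^ 2) L).

Definition factors_pos (a : nat -> Z) (L : list nat) (u : R) : Prop :=
  forall j, In j L -> IZR (a j) * u + 1 > 0.

Lemma fold_Rplus_nonneg (g : nat -> R) (L : list nat) :
  (forall j, In j L -> 0 <= g j) -> 0 <= fold_right Rplus 0 (map g L).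
Proof.
  induction L as [|j L IH]; intros H; simpl; [lra|].
  pose proof (H j (or_introl eq_refl)). pose proof (IH (fun i Hi => H i (or_intror Hi))). lra.
Qed.

Lemma fold_Rplus_pos (g : nat -> R) (L : list nat) :
  (forall j, In j L -> 0 <= g j) -> (exists j, In j L /\ 0 < g j) ->
  0 < fold_right Rplus 0 (map g L).
Proof.
  induction L as [|j L IH]; intros H [i [Hi Hg]]; [destruct Hi|]. simpl.
  pose proof (H j (or_introl eq_refl)).
  pose proof (fold_Rplus_nonneg g L (fun i Hi => H i (or_intror Hi))).
  destruct Hi as [<-|Hi]; [lra|].
  enough (0 < fold_right Rplus 0 (map g L)) by lra.
  apply IH; [intros; apply H; simpl; auto | exists i; auto].
Qed.

Section FactorProduct.

Variables (a : nat -> Z) (L : list nat).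

Lemma QL_polyfun : polyfun (QL a L).
Proof.
  induction L as [|j L' IH]; unfold QL; simpl; [apply polyfun_const|].
  apply (polyfun_mul (fun u => IZR (a j) * u + 1)); [apply polyfun_affine | exact IH].
Qed.

Lemma QL_0 : QL a L 0 = 1.
Proof. induction L as [|j L' IH]; unfold QL in *; simpl; [|rewrite IH]; ring. Qed.

Lemma QL_root (j : nat) (z : R) : In j L -> IZR (a j) * z + 1 = 0 -> QL a L z = 0.
Proof.
  induction L as [|i L' IH]; intros Hj Hz; [destruct Hj|]. unfold QL in *; simpl.
  destruct Hj as [<-|Hj]; [rewrite Hz | rewrite IH]; auto; ring.
Qed.

Lemma factors_pos_0 : factors_pos a L 0.
Proof. intros j _. lra. Qed.

Lemma factors_pos_convex (x y z : R) :
  factors_pos a L x -> factors_pos a L z -> x <= y <= z -> factors_pos a L y.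
Proof.
  intros Hx Hz Hy j Hj. pose proof (Hx j Hj). pose proof (Hz j Hj).
  destruct (Rle_dec 0 (IZR (a j))); nra.
Qed.

Lemma factors_pos_open (x : R) : factors_pos a L x ->
  exists r, 0 < r /\ forall y, Rabs (y - x) < r -> factors_pos a L y.
Proof.
  induction L as [|j L' IH]; intros H.
  - exists 1. split; [lra|]. intros y _ i [].
  - destruct (IH (fun i Hi => H i (or_intror Hi))) as [r [Hr Hr2]].
    assert (Hj : IZR (a j) * x + 1 > 0) by (apply H; simpl; auto).
    set (rj := (IZR (a j) * x + 1) / (Rabs (IZR (a j)) + 1)).
    pose proof (Rabs_pos (IZR (a j))).
    assert (Hrj : 0 < rj) by (unfold rj; apply Rdiv_lt_0_compat; lra).
    exists (Rmin r rj). split; [apply Rmin_glb_lt; auto|].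
    intros y Hy. pose proof (Rmin_l r rj). pose proof (Rmin_r r rj).
    intros i [<-|Hi]; [|apply Hr2; auto; lra].
    assert (Rabs (IZR (a j)) * Rabs (y - x) <= Rabs (IZR (a j)) * rj)
      by (apply Rmult_le_compat_l; lra).
    assert (Rabs (IZR (a j)) * rj < IZR (a j) * x + 1).
    { unfold rj. apply Rmult_lt_reg_r with (Rabs (IZR (a j)) + 1); [lra|].
      field_simplify; [nra | lra]. }
    rewrite <- Rabs_mult in *.
    pose proof (Rle_abs (- (IZR (a j) * (y - x)))). rewrite Rabs_Ropp in *. nra.
Qed.

Lemma QL_pos (u : R) : factors_pos a L u -> 0 < QL a L u.
Proof.
  induction L as [|j L' IH]; intros H; unfold QL; simpl; [lra|].
  apply Rmult_lt_0_compat; [apply H; simpl; auto | apply IH; intros i Hi; apply H; simpl; auto].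
Qed.

Lemma QL_derive (u : R) : factors_pos a L u ->
  is_derive (QL a L) u (QL a L u * SL 1 a L u).
Proof.
  induction L as [|j L' IH]; intros H; unfold QL, SL; simpl.
  - apply (is_derive_eq _ _ 0); [exact (is_derive_const _ _) | ring].
  - assert (Hj : IZR (a j) * u + 1 > 0) by (apply H; simpl; auto).
    specialize (IH (fun i Hi => H i (or_intror Hi))). unfold QL, SL in IH.
    eapply is_derive_eq; [apply (Derive.is_derive_mult (fun u => IZR (a j) * u + 1)); [|exact IH]|].
    + auto_derive; [auto | reflexivity].
    + cbv beta. simpl pow. field; lra.
Qed.

Lemma SL1_derive (u : R) : factors_pos a L u -> is_derive (SL 1 a L) u (- SLsq a L u).
Proof.
  induction L as [|j L' IH]; intros H; unfold SL, SLsq; simpl.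
  - apply (is_derive_eq _ _ 0); [exact (is_derive_const _ _) | ring].
  - assert (Hj : IZR (a j) * u + 1 > 0) by (apply H; simpl; auto).
    specialize (IH (fun i Hi => H i (or_intror Hi))). unfold SL, SLsq in IH.
    eapply is_derive_eq;
      [apply (is_derive_plus (fun u => IZR (a j) ^ 1 / (IZR (a j) * u + 1))); [|exact IH]|].
    + auto_derive; [lra | reflexivity].
    + unfold plus; simpl. field; lra.
Qed.

Lemma SL_ex_derive (k : nat) (u : R) : factors_pos a L u -> ex_derive (SL k a L) u.
Proof.
  induction L as [|j L' IH]; intros H; unfold SL; simpl; [apply ex_derive_const|].
  assert (Hj : IZR (a j) * u + 1 > 0) by (apply H; simpl; auto).
  specialize (IH (fun i Hi => H i (or_intror Hi))).
  apply (ex_derive_plus (fun u => IZR (a j) ^ k / (IZR (a j) * u + 1))); [|exact IH].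
  auto_derive. lra.
Qed.

Hypothesis a_nonzero : exists j, In j L /\ a j <> 0%Z.

Lemma SLsq_pos (u : R) : factors_pos a L u -> 0 < SLsq a L u.
Proof.
  intros H. destruct a_nonzero as [i [Hi Hai]]. apply fold_Rplus_pos.
  - intros j Hj. pose proof (H j Hj).
    apply Rmult_le_pos; [nra | left; apply Rinv_0_lt_compat; nra].
  - exists i. split; auto. pose proof (H i Hi). apply not_0_IZR in Hai.
    apply Rdiv_lt_0_compat; nra.
Qed.

Lemma SL2_pos (u : R) : factors_pos a L u -> 0 < SL 2 a L u.
Proof.
  intros H. destruct a_nonzero as [i [Hi Hai]]. apply fold_Rplus_pos.
  - intros j Hj. pose proof (H j Hj).
    apply Rmult_le_pos; [nra | left; apply Rinv_0_lt_compat; nra].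
  - exists i. split; auto. pose proof (H i Hi). apply not_0_IZR in Hai.
    apply Rdiv_lt_0_compat; nra.
Qed.

Lemma SL1_decreasing (x z : R) : x < z -> (forall y, x <= y <= z -> factors_pos a L y) ->
  SL 1 a L z < SL 1 a L x.
Proof.
  intros Hxz HD.
  apply (derive_neg_decreasing (SL 1 a L) (fun y => - SLsq a L y) x z); try lra.
  - intros y Hy. apply SL1_derive, HD, Hy.
  - intros y Hy. pose proof (SLsq_pos y (HD y ltac:(lra))). lra.
Qed.

End FactorProduct.

Lemma SL_comp_continuity_pt (a : nat -> Z) (L : list nat) (k : nat) (u : R -> R) (t : R) :
  continuity_pt u t -> factors_pos a L (u t) -> continuity_pt (fun t => SL k a L (u t)) t.
Proof.
  intros Hu Dt. apply (continuity_pt_comp u (SL k a L)); [exact Hu|].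
  destruct (SL_ex_derive a L k (u t) Dt) as [d D]. apply (is_derive_continuity_pt _ _ _ D).
Qed.

Lemma factors_pos_closed (a : nat -> Z) (L : list nat) (v : R -> R) (t e : R) : 0 < e ->
  continuity_pt v t ->
  (forall d, 0 < d -> exists s, Rabs (s - t) < d /\ factors_pos a L (v s) /\ e <= QL a L (v s)) ->
  factors_pos a L (v t).
Proof.
  intros He Hv H.
  assert (Qt : e <= QL a L (v t)).
  { apply (continuity_pt_ge (fun s => QL a L (v s))).
    - apply (continuity_pt_comp v (QL a L)); [exact Hv | apply polyfun_continuity_pt, QL_polyfun].
    - intros d Hd. destruct (H d Hd) as [s [Hs [_ Qs]]]. now exists s. }
  intros j Hj.
  assert (G : 0 <= IZR (a j) * v t + 1).
  { apply (continuity_pt_ge (fun s => IZR (a j) * v s + 1)).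
    - apply (continuity_pt_comp v (fun x => IZR (a j) * x + 1)); [exact Hv|].
      apply polyfun_continuity_pt, polyfun_affine.
    - intros d Hd. destruct (H d Hd) as [s [Hs [Ds _]]]. exists s. split; auto.
      left; apply Ds, Hj. }
  destruct G as [G | G]; [lra|].
  rewrite (QL_root a L j (v t) Hj (eq_sym G)) in Qt. lra.
Qed.

Lemma Zsum_nonpos (s : list Z) : (forall z, In z s -> (z <= 0)%Z) ->
  (fold_right Z.add 0%Z s <= 0)%Z /\
  ((exists z, In z s /\ z <> 0%Z) -> (fold_right Z.add 0%Z s < 0)%Z).
Proof.
  induction s as [|x s IH]; intros H; simpl.
  - split; [lia | intros [z [[] _]]].
  - pose proof (H x (or_introl eq_refl)).
    destruct (IH (fun z Hz => H z (or_intror Hz))) as [IH1 IH2].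
    split; [lia|]. intros [z [[<-|Hz] Hnz]]; [lia|].
    enough (fold_right Z.add 0%Z s < 0)%Z by lia. apply IH2. now exists z.
Qed.

Lemma Zsum_opp (s : list Z) : fold_right Z.add 0%Z (map Z.opp s) = (- fold_right Z.add 0%Z s)%Z.
Proof. induction s as [|x s IH]; simpl; lia. Qed.

Lemma Zsum_zero_signs (s : list Z) : fold_right Z.add 0%Z s = 0%Z ->
  (exists z, In z s /\ z <> 0%Z) ->
  (exists z, In z s /\ (z > 0)%Z) /\ (exists z, In z s /\ (z < 0)%Z).
Proof.
  intros Hs Hnz. split; apply NNPP; intros Hn.
  - assert (Hle : forall z, In z s -> (z <= 0)%Z).
    { intros z Hz. apply Z.nlt_ge. intros Hz0. apply Hn. exists z. split; auto; lia. }
    pose proof (proj2 (Zsum_nonpos s Hle) Hnz). lia.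
  - assert (Hle : forall z, In z (map Z.opp s) -> (z <= 0)%Z).
    { intros z Hz. apply in_map_iff in Hz as [y [<- Hy]].
      apply Z.nlt_ge. intros Hy0. apply Hn. exists y. split; auto; lia. }
    destruct Hnz as [z [Hz Hz0]].
    pose proof (proj2 (Zsum_nonpos _ Hle)) as X. rewrite Zsum_opp in X.
    enough (- fold_right Z.add 0%Z s < 0)%Z by lia.
    apply X. exists (- z)%Z. split; [apply in_map, Hz | lia].
Qed.

Lemma standing_signs (a : nat -> Z) (m : nat) : standing a m ->
  (exists j, In j (seq 0 m) /\ (a j > 0)%Z) /\ (exists j, In j (seq 0 m) /\ (a j < 0)%Z).
Proof.
  intros [_ [_ [[j [Hj Hj0]] [_ Hsum]]]].
  destruct (Zsum_zero_signs (map a (seq 0 m)) Hsum) as [[zp [Hp Pp]] [zn [Hn Pn]]].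
  { exists (a j). split; auto. apply in_map, in_seq. lia. }
  apply in_map_iff in Hp as [jp [<- Hjp]]. apply in_map_iff in Hn as [jn [<- Hjn]].
  split; [exists jp | exists jn]; auto.
Qed.

Lemma In_argmax (g : nat -> R) (P : nat -> Prop) (Pdec : forall j, {P j} + {~ P j})
  (L : list nat) : (exists j, In j L /\ P j) ->
  exists k, In k L /\ P k /\ forall j, In j L -> P j -> g j <= g k.
Proof.
  induction L as [|i L IH]; intros [j [Hj Pj]]; [destruct Hj|].
  destruct (classic (exists j, In j L /\ P j)) as [Ex|NEx].
  - destruct (IH Ex) as [k [Hk [Pk Hm]]].
    destruct (Pdec i) as [Pi|NPi]; [destruct (Rle_dec (g i) (g k))|].
    + exists k. repeat split; [simpl; auto | auto |]. intros l [<-|Hl] Pl; auto.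
    + exists i. repeat split; [simpl; auto | auto |]. intros l [<-|Hl] Pl; [lra|].
      pose proof (Hm l Hl Pl). lra.
    + exists k. repeat split; [simpl; auto | auto |]. intros l [<-|Hl] Pl; [contradiction | auto].
  - destruct Hj as [<-|Hj]; [|exfalso; apply NEx; exists j; auto].
    exists i. repeat split; [simpl; auto | auto |]. intros l [<-|Hl] Pl; [lra|].
    exfalso; apply NEx; exists l; auto.
Qed.

Section DomainBoundary.

Variables (a : nat -> Z) (L : list nat).

Lemma QL_small_left (y0 e : R) : 0 < e -> factors_pos a L y0 ->
  (exists j, In j L /\ (a j > 0)%Z) ->
  exists p, p < y0 /\ factors_pos a L p /\ QL a L p < e.
Proof.
  intros He Hy0 Ex.
  destruct (In_argmax (fun j => - / IZR (a j)) (fun j => (a j > 0)%Z)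
    (fun j => Z_gt_dec (a j) 0) L Ex) as [k [Hk [Pk Hm]]].
  (* [z] is the largest zero of [QL a L] below [y0] *)
  set (z := - / IZR (a k)).
  assert (Hak : IZR (a k) > 0) by (apply IZR_lt; lia).
  assert (Qz : QL a L z = 0) by (apply (QL_root a L k z Hk); unfold z; field; lra).
  assert (Hzy : z < y0).
  { pose proof (Hy0 k Hk). unfold z.
    assert (IZR (a k) * (- / IZR (a k)) = -1) by (field; lra). nra. }
  assert (HD : forall x, z < x <= y0 -> factors_pos a L x).
  { intros x Hx j Hj. destruct (Z_gt_dec (a j) 0) as [Pj|NPj].
    - pose proof (Hm j Hj Pj) as Hj'. assert (Haj : IZR (a j) > 0) by (apply IZR_lt; lia).
      assert (IZR (a j) * (- / IZR (a j)) = -1) by (field; lra).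
      cbv beta in Hj'. fold z in Hj'. nra.
    - assert (Haj : IZR (a j) <= 0) by (apply IZR_le; lia).
      pose proof (Hy0 j Hj). nra. }
  destruct (polyfun_continuity_pt (QL a L) z (QL_polyfun a L) e He) as [d [Hd Hd2]].
  set (p := z + Rmin d (y0 - z) / 2).
  pose proof (Rmin_l d (y0 - z)). pose proof (Rmin_r d (y0 - z)).
  assert (0 < Rmin d (y0 - z)) by (apply Rmin_glb_lt; lra).
  exists p. split; [unfold p; lra|]. split; [apply HD; unfold p; lra|].
  assert (X : R_dist (QL a L p) (QL a L z) < e).
  { apply Hd2. split; [split; [constructor | unfold p; lra]|].
    simpl. unfold R_dist, p. rewrite Rabs_pos_eq; lra. }
  unfold R_dist in X. rewrite Qz, Rminus_0_r in X. pose proof (Rle_abs (QL a L p)). lra.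
Qed.

Lemma QL_opp (u : R) : QL (fun j => (- a j)%Z) L (- u) = QL a L u.
Proof.
  unfold QL. f_equal. apply map_ext. intros j. rewrite opp_IZR. ring.
Qed.

Lemma factors_pos_opp (u : R) : factors_pos (fun j => (- a j)%Z) L (- u) <-> factors_pos a L u.
Proof.
  split; intros H j Hj; specialize (H j Hj); cbv beta in *;
    rewrite ?opp_IZR, ?Rmult_opp_opp in *; exact H.
Qed.

End DomainBoundary.

Lemma QL_small_right (a : nat -> Z) (L : list nat) (y0 e : R) : 0 < e -> factors_pos a L y0 ->
  (exists j, In j L /\ (a j < 0)%Z) ->
  exists q, y0 < q /\ factors_pos a L q /\ QL a L q < e.
Proof.
  intros He Hy0 [j [Hj Hneg]].
  destruct (QL_small_left (fun j => (- a j)%Z) L (- y0) e He) as [p [Hp [Dp Qp]]].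
  - apply factors_pos_opp. exact Hy0.
  - exists j. split; auto. lia.
  - exists (- p). rewrite <- (Ropp_involutive p) in Dp, Qp.
    rewrite factors_pos_opp in Dp. rewrite QL_opp in Qp. repeat split; auto; lra.
Qed.

Section CriticalPoint.

Variables (a : nat -> Z) (L : list nat) (c : R).
Hypothesis a_nonzero : exists j, In j L /\ a j <> 0%Z.
Hypothesis S1c : SL 1 a L c = 0.

Lemma QL_derive_sign (x : R) : (forall y, Rmin x c <= y <= Rmax x c -> factors_pos a L y) ->
  x = c \/ (x - c) * (QL a L x * SL 1 a L x) < 0.
Proof.
  intros HD. pose proof (QL_pos a L x (HD x ltac:(split; [apply Rmin_l | apply Rmax_l]))).
  destruct (Rtotal_order x c) as [Hlt|[Heq|Hgt]]; [right | left; auto | right].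
  - rewrite Rmin_left, Rmax_right in HD by lra.
    pose proof (SL1_decreasing a L a_nonzero x c Hlt HD).
    assert (0 < QL a L x * SL 1 a L x) by (apply Rmult_lt_0_compat; lra). nra.
  - rewrite Rmin_right, Rmax_left in HD by lra.
    pose proof (SL1_decreasing a L a_nonzero c x Hgt HD).
    assert (QL a L x * SL 1 a L x < 0) by (apply Rmult_pos_neg; lra). nra.
Qed.

Lemma QL_increasing_below (x z : R) : x < z <= c ->
  (forall y, x <= y <= c -> factors_pos a L y) -> QL a L x < QL a L z.
Proof.
  intros Hxz HD.
  apply (derive_pos_increasing (QL a L) (fun y => QL a L y * SL 1 a L y) x z); try lra.
  - intros y Hy. apply QL_derive, HD. lra.
  - intros y Hy. cbv beta.
    destruct (QL_derive_sign y) as [Hyc|Hs]; [|lra|].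
    + intros t Ht. apply HD. rewrite Rmin_left, Rmax_right in Ht; lra.
    + set (d := QL a L y * SL 1 a L y) in *. nra.
Qed.

Lemma QL_decreasing_above (x z : R) : c <= x < z ->
  (forall y, c <= y <= z -> factors_pos a L y) -> QL a L z < QL a L x.
Proof.
  intros Hxz HD.
  apply (derive_neg_decreasing (QL a L) (fun y => QL a L y * SL 1 a L y) x z); try lra.
  - intros y Hy. apply QL_derive, HD. lra.
  - intros y Hy. cbv beta.
    destruct (QL_derive_sign y) as [Hyc|Hs]; [|lra|].
    + intros t Ht. apply HD. rewrite Rmin_right, Rmax_left in Ht; lra.
    + set (d := QL a L y * SL 1 a L y) in *. nra.
Qed.

Lemma QL_lt_max (x : R) : x <> c ->
  (forall y, Rmin x c <= y <= Rmax x c -> factors_pos a L y) -> QL a L x < QL a L c.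
Proof.
  intros Hx HD. destruct (Rtotal_order x c) as [Hlt|[Heq|Hgt]]; [|contradiction|].
  - rewrite Rmin_left, Rmax_right in HD by lra. apply QL_increasing_below; auto; lra.
  - rewrite Rmin_right, Rmax_left in HD by lra. apply QL_decreasing_above; auto; lra.
Qed.

Lemma QL_superlevel_trap (p q e x : R) : p < c < q -> factors_pos a L p -> factors_pos a L q ->
  QL a L p < e -> QL a L q < e -> factors_pos a L x -> e <= QL a L x -> p <= x <= q.
Proof.
  intros Hc Dp Dq Hp Hq Dx Hx.
  split; apply Rnot_lt_le; intro Hlt.
  - enough (QL a L x < QL a L p) by lra.
    apply QL_increasing_below; [lra|]. intros y Hy.
    apply (factors_pos_convex a L x y q); auto; lra.
  - enough (QL a L x < QL a L q) by lra.
    apply QL_decreasing_above; [lra|]. intros y Hy.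
    apply (factors_pos_convex a L p y x); auto; lra.
Qed.

Lemma QL_double_root_factor : factors_pos a L c ->
  exists K, polyfun K /\ (forall x, QL a L x = QL a L c - (x - c) ^ 2 * K x) /\ 0 < K c.
Proof.
  intros Dc.
  destruct (polyfun_double_root (QL a L) c (QL_polyfun a L)) as [K [PK EK]].
  { apply (is_derive_eq _ _ _ _ (QL_derive a L c Dc)). rewrite S1c. ring. }
  exists K. split; [exact PK|]. split; [exact EK|].
  destruct (polyfun_derive K PK) as [Kd [PKd DK]].
  destruct (polyfun_derive Kd PKd) as [Kdd [_ DKd]].
  destruct (polyfun_derive (QL a L) (QL_polyfun a L)) as [Qd [_ DQ]].
  (* [Q'' c = - Q c * SLsq c < 0] computed from [Q' = Q * S1] near [c] *)
  destruct (factors_pos_open a L c Dc) as [r [Hr Dr]].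
  assert (EQd : forall y, Rabs (y - c) < r -> QL a L y * SL 1 a L y = Qd y).
  { intros y Hy. rewrite <- (is_derive_unique _ _ _ (DQ y)).
    symmetry. apply is_derive_unique, QL_derive, Dr, Hy. }
  assert (D2 : is_derive Qd c (Qd c * SL 1 a L c + QL a L c * (- SLsq a L c))).
  { apply (is_derive_ext_loc (fun y => QL a L y * SL 1 a L y)).
    - exists (mkposreal r Hr). intros y Hy. apply EQd, Hy.
    - rewrite <- (EQd c) by (rewrite Rminus_diag, Rabs_R0; lra).
      apply Derive.is_derive_mult; [apply QL_derive, Dc | apply SL1_derive, Dc]. }
  pose proof (double_root_second_derive (QL a L) K Kd c (QL a L c) EK DK Qd _ DQ
    (ex_intro _ (Kdd c) (DKd c)) D2) as E.
  rewrite S1c in E. pose proof (QL_pos a L c Dc). pose proof (SLsq_pos a L a_nonzero c Dc). nra.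
Qed.

End CriticalPoint.

Lemma QL_level_interval (a : nat -> Z) (L : list nat) (u0 e : R) :
  (exists j, In j L /\ (a j > 0)%Z) -> (exists j, In j L /\ (a j < 0)%Z) ->
  factors_pos a L u0 -> 0 < e < 1 ->
  exists p c q, p < u0 < q /\ p < c < q /\ (forall x, p <= x <= q -> factors_pos a L x) /\
    QL a L p < e /\ QL a L q < e /\ SL 1 a L c = 0 /\ e < QL a L c.
Proof.
  intros Hpos Hneg Du0 He.
  assert (Dmin : factors_pos a L (Rmin 0 u0))
    by (unfold Rmin; destruct Rle_dec; auto; apply factors_pos_0).
  assert (Dmax : factors_pos a L (Rmax 0 u0))
    by (unfold Rmax; destruct Rle_dec; auto; apply factors_pos_0).
  pose proof (Rmin_l 0 u0). pose proof (Rmin_r 0 u0).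
  pose proof (Rmax_l 0 u0). pose proof (Rmax_r 0 u0).
  destruct (QL_small_left a L (Rmin 0 u0) e ltac:(lra) Dmin Hpos) as [p [Hp [Dp Qp]]].
  destruct (QL_small_right a L (Rmax 0 u0) e ltac:(lra) Dmax Hneg) as [q [Hq [Dq Qq]]].
  assert (HD : forall x, p <= x <= q -> factors_pos a L x)
    by (intros; apply (factors_pos_convex a L p x q); auto).
  destruct (continuity_ab_maj (QL a L) p q ltac:(lra)) as [c [Hmax Hc]].
  { intros; apply polyfun_continuity_pt, QL_polyfun. }
  assert (Qc : 1 <= QL a L c) by (rewrite <- (QL_0 a L); apply Hmax; lra).
  assert (Hpcq : p < c < q).
  { split; apply Rnot_le_lt; intros Hle; assert (c = p \/ c = q) as [->| ->] by lra; lra. }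
  exists p, c, q. repeat split; auto; try lra.
  assert (pr : derivable_pt (QL a L) c).
  { exists (QL a L c * SL 1 a L c). apply is_derive_Reals, QL_derive, HD. lra. }
  pose proof (deriv_maximum (QL a L) p q c pr (proj1 Hpcq) (proj2 Hpcq)
    ltac:(intros; apply Hmax; lra)) as E.
  rewrite (derive_pt_eq_0 _ _ (QL a L c * SL 1 a L c) pr) in E
    by (apply is_derive_Reals, QL_derive, HD; lra).
  pose proof (QL_pos a L c (HD c ltac:(lra))).
  apply Rmult_integral in E as [E|E]; lra.
Qed.

Lemma QL_SL1_lipschitz (a : nat -> Z) (L : list nat) (p q : R) : p <= q ->
  (forall x, p <= x <= q -> factors_pos a L x) ->
  exists M, 0 <= M /\ forall x y, p <= x <= q -> p <= y <= q ->
    Rabs (QL a L x * SL 1 a L x - QL a L y * SL 1 a L y) <= M * Rabs (x - y).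
Proof.
  intros Hpq HD.
  destruct (polyfun_derive (QL a L) (QL_polyfun a L)) as [Qd [PQd DQ]].
  assert (EQd : forall x, p <= x <= q -> QL a L x * SL 1 a L x = Qd x).
  { intros x Hx. rewrite <- (is_derive_unique _ _ _ (DQ x)).
    symmetry. apply is_derive_unique, QL_derive, HD, Hx. }
  destruct (polyfun_lipschitz Qd p q PQd Hpq) as [M [HM Lip]].
  exists M. split; auto. intros x y Hx Hy. rewrite !EQd by auto. auto.
Qed.

Section QLGapRoot.

Variables (a : nat -> Z) (L : list nat) (p c q : R) (K Kd : R -> R).
Hypothesis a_nonzero : exists j, In j L /\ a j <> 0%Z.
Hypothesis S1c : SL 1 a L c = 0.
Hypothesis c_inside : p < c < q.
Hypothesis domain : forall x, p <= x <= q -> factors_pos a L x.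
Hypothesis QL_eq : forall x, QL a L x = QL a L c - (x - c) ^ 2 * K x.
Hypothesis K_c_pos : 0 < K c.
Hypothesis K_derive : forall x, is_derive K x (Kd x).
Hypothesis Kd_continuity : forall x, continuity_pt Kd x.

Lemma domain_between x : p <= x <= q -> forall y, Rmin x c <= y <= Rmax x c -> factors_pos a L y.
Proof.
  intros Hx y Hy. apply domain. unfold Rmin, Rmax in Hy; destruct Rle_dec in Hy; lra.
Qed.

Lemma QL_gap_factor_pos x : p <= x <= q -> 0 < K x.
Proof.
  intros Hx. destruct (Req_dec x c) as [->|Hxc]; auto.
  pose proof (QL_lt_max a L c a_nonzero S1c x Hxc (domain_between x Hx)) as Hlt.
  rewrite QL_eq in Hlt. assert (0 < (x - c) ^ 2) by (apply pow2_gt_0; lra). nra.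
Qed.

Lemma QL_gap_root_sqr x : p <= x <= q -> gap_root K c x ^ 2 = QL a L c - QL a L x.
Proof.
  intros Hx. apply (gap_root_sqr (QL a L)); [apply QL_eq | left; apply QL_gap_factor_pos, Hx].
Qed.

Lemma QL_gap_root_mul_d x : p <= x <= q ->
  - 2 * gap_root K c x * gap_root_d K Kd c x = QL a L x * SL 1 a L x.
Proof.
  intros Hx. rewrite Rmult_assoc, (gap_root_mul_d (QL a L) K Kd c (QL a L c) QL_eq K_derive x _
    (QL_gap_factor_pos x Hx) (QL_derive a L x (domain x Hx))). field.
Qed.

Lemma QL_gap_root_increasing x : p <= x <= q ->
  is_derive (gap_root K c) x (gap_root_d K Kd c x) /\ 0 < gap_root_d K Kd c x.
Proof.
  intros Hx. pose proof (QL_gap_factor_pos x Hx) as HK.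
  split; [apply (gap_root_derive K Kd c K_derive x HK)|].
  apply (gap_root_d_pos (QL a L) K Kd c (QL a L c) QL_eq K_derive x _ HK
    (QL_derive a L x (domain x Hx))).
  apply (QL_derive_sign a L c a_nonzero S1c x (domain_between x Hx)).
Qed.

Lemma QL_gap_root_continuity_pt x : p <= x <= q -> continuity_pt (gap_root_d K Kd c) x.
Proof.
  intros Hx.
  apply (gap_root_d_continuity_pt K Kd c K_derive x (QL_gap_factor_pos x Hx)), Kd_continuity.
Qed.

Lemma QL_gap_root_ends (e : R) : QL a L p < e -> QL a L q < e -> e < QL a L c ->
  gap_root K c p < - sqrt (QL a L c - e) /\ sqrt (QL a L c - e) < gap_root K c q.
Proof.
  intros Qp Qq Qc.
  assert (Hr : 0 < sqrt (QL a L c - e)) by (apply sqrt_lt_R0; lra).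
  assert (Hr2 : sqrt (QL a L c - e) ^ 2 = QL a L c - e) by (apply pow2_sqrt; lra).
  pose proof (QL_gap_root_sqr p ltac:(lra)). pose proof (QL_gap_root_sqr q ltac:(lra)).
  assert (gap_root K c p <= 0 <= gap_root K c q).
  { unfold gap_root. pose proof (sqrt_pos (K p)). pose proof (sqrt_pos (K q)). split; nra. }
  split; nra.
Qed.

End QLGapRoot.

Lemma QL_orbit (a : nat -> Z) (L : list nat) (u0 A w0 : R) :
  (exists j, In j L /\ (a j > 0)%Z) -> (exists j, In j L /\ (a j < 0)%Z) ->
  factors_pos a L u0 -> 0 < A < 1 -> w0 ^ 2 + A ^ 2 = QL a L u0 ->
  exists (p q : R) (u w : R -> R) (P : R),
    (forall x, p <= x <= q -> factors_pos a L x) /\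
    (forall x, factors_pos a L x -> A ^ 2 <= QL a L x -> p <= x <= q) /\ 0 < P /\
    (forall t, is_derive u t (2 * w t) /\ is_derive w t (QL a L (u t) * SL 1 a L (u t)) /\
       p < u t < q /\ QL a L (u t) = A ^ 2 + w t ^ 2 /\ u (t + P) = u t /\ w (t + P) = w t) /\
    u 0 = u0 /\ w 0 = w0 /\ (exists t1 t2, u t1 <> u t2) /\ (exists t1 t2, w t1 <> w t2).
Proof.
  intros Hpos Hneg Du0 HA Hw0.
  assert (Hnz : exists j, In j L /\ a j <> 0%Z)
    by (destruct Hpos as [j [Hj Hj0]]; exists j; split; auto; lia).
  destruct (QL_level_interval a L u0 (A ^ 2) Hpos Hneg Du0 ltac:(split; nra))
    as [p [c [q [Hu0 [Hc [HD [Qp [Qq [S1c QcA]]]]]]]]].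
  destruct (QL_double_root_factor a L c Hnz S1c (HD c ltac:(lra))) as [K [PK [EK Kc]]].
  destruct (polyfun_derive K PK) as [Kd [PKd DK]].
  assert (Kdc : forall x, continuity_pt Kd x) by (intros; apply polyfun_continuity_pt, PKd).
  pose proof (QL_gap_root_sqr a L p c q K Hnz S1c Hc HD EK Kc) as VQ.
  destruct (QL_gap_root_ends a L p c q K Hnz S1c Hc HD EK Kc (A ^ 2) Qp Qq QcA) as [Vp Vq].
  destruct (level_set_flow (gap_root K c) (gap_root_d K Kd c) p q (sqrt (QL a L c - A ^ 2)) u0 w0)
    as [u [w [P [HP [Hsol [U0 [W0 [Hu Hw]]]]]]]]; auto; try lra.
  - apply sqrt_lt_R0. lra.
  - apply (QL_gap_root_increasing a L p c q K Kd); auto.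
  - apply (QL_gap_root_continuity_pt a L p c q K Kd); auto.
  - rewrite VQ, pow2_sqrt by lra. lra.
  - exists p, q, u, w, P. split; [exact HD|]. split.
    { intros x Dx Hx. apply (QL_superlevel_trap a L c Hnz S1c p q (A ^ 2) x); auto; apply HD; lra. }
    split; [exact HP|]. split; [|auto].
    intros t. destruct (Hsol t) as [Du [Dw [Hut [E Hper]]]].
    split; [exact Du|]. split; [|split; [exact Hut | split; [|exact Hper]]].
    + apply (is_derive_eq _ _ _ _ Dw). apply (QL_gap_root_mul_d a L p c q K Kd); auto; lra.
    + rewrite VQ, pow2_sqrt in E by lra. lra.
Qed.

(** * Solutions of the system *)

Section PolarSolution.

Variables (a : nat -> Z) (L : list nat) (u th : R -> R).
Hypothesis u_th_solve : forall t,
  is_derive u t (2 * sqrt (QL a L (u t)) * cos (th t)) /\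
  is_derive th t (- sqrt (QL a L (u t)) * sin (th t) * SL 1 a L (u t)).

Lemma sqrt_QL_derive (s : R) : factors_pos a L (u s) ->
  is_derive (fun t => sqrt (QL a L (u t))) s (QL a L (u s) * SL 1 a L (u s) * cos (th s)).
Proof.
  intros Ds. pose proof (QL_pos a L _ Ds). pose proof (sqrt_lt_R0 _ H).
  apply (is_derive_eq _ _ (2 * sqrt (QL a L (u s)) * cos (th s) * (QL a L (u s) * SL 1 a L (u s))
                             / (2 * sqrt (QL a L (u s))))); [|field; lra].
  apply (is_derive_sqrt (fun t => QL a L (u t))); [|exact H].
  apply (is_derive_comp (QL a L) u); [apply QL_derive, Ds | apply u_th_solve].
Qed.

Lemma polar_sin_derive (s : R) : factors_pos a L (u s) ->
  is_derive (fun t => sqrt (QL a L (u t)) * sin (th t)) s 0.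
Proof.
  intros Ds. pose proof (sqrt_sqrt _ (Rlt_le _ _ (QL_pos a L _ Ds))) as E.
  set (r := sqrt (QL a L (u s))) in *.
  apply (is_derive_eq _ _ (QL a L (u s) * SL 1 a L (u s) * cos (th s) * sin (th s) +
                           r * ((- r * sin (th s) * SL 1 a L (u s)) * cos (th s)))).
  - apply (Derive.is_derive_mult (fun t => sqrt (QL a L (u t))) (fun t => sin (th t)));
      [apply sqrt_QL_derive, Ds|].
    apply (is_derive_comp sin th); [apply is_derive_sin | apply u_th_solve].
  - rewrite <- E. ring.
Qed.

Lemma polar_cos_derive (s : R) : factors_pos a L (u s) ->
  is_derive (fun t => sqrt (QL a L (u t)) * cos (th t)) s (QL a L (u s) * SL 1 a L (u s)).
Proof.
  intros Ds. pose proof (sqrt_sqrt _ (Rlt_le _ _ (QL_pos a L _ Ds))) as E.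
  set (r := sqrt (QL a L (u s))) in *.
  apply (is_derive_eq _ _ (QL a L (u s) * SL 1 a L (u s) * cos (th s) * cos (th s) +
                           r * ((- r * sin (th s) * SL 1 a L (u s)) * - sin (th s)))).
  - apply (Derive.is_derive_mult (fun t => sqrt (QL a L (u t))) (fun t => cos (th t)));
      [apply sqrt_QL_derive, Ds|].
    apply (is_derive_comp cos th); [apply is_derive_cos | apply u_th_solve].
  - pose proof (sin2_cos2 (th s)) as SC. unfold Rsqr in SC. rewrite <- E.
    transitivity (r * r * SL 1 a L (u s) * (sin (th s) * sin (th s) + cos (th s) * cos (th s)));
      [ring | rewrite SC; ring].
Qed.

Lemma first_integral_forward : factors_pos a L (u 0) -> 0 < sqrt (QL a L (u 0)) * sin (th 0) ->
  forall t, 0 <= t -> factors_pos a L (u t).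
Proof.
  intros D0 HA.
  set (F := fun t => sqrt (QL a L (u t)) * sin (th t)).
  assert (Fconst : forall t, 0 <= t ->
            (forall s, 0 <= s <= t -> factors_pos a L (u s)) -> F t = F 0).
  { intros t Ht H. symmetry. apply derive_zero_const_interval; auto.
    intros s Hs. apply polar_sin_derive, H, Hs. }
  assert (cu : forall s, continuity_pt u s)
    by (intros s; apply (is_derive_continuity_pt _ _ _ (proj1 (u_th_solve s)))).
  apply real_induction_nonneg.
  - intros t Ht H. destruct (Req_dec t 0) as [->|Hne]; [exact D0|].
    apply (factors_pos_closed a L u t (F 0 ^ 2)); [apply pow2_gt_0; unfold F; lra | apply cu|].
    intros d Hd. pose proof (Rmin_l d t). pose proof (Rmin_r d t).
    assert (0 < Rmin d t) by (apply Rmin_glb_lt; lra).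
    exists (t - Rmin d t / 2). split; [rewrite Rabs_left; lra|]. split; [apply H; lra|].
    rewrite <- (Fconst (t - Rmin d t / 2)) by (lra || intros; apply H; lra).
    apply sqrt_mul_sin_sqr_le, Rlt_le, QL_pos, H. lra.
  - intros t Ht Dt.
    destruct (continuity_pt_preimage_open u t (factors_pos a L) (cu t) (factors_pos_open a L _ Dt))
      as [d [Hd Hd2]].
    exists d. split; auto. intros s Hs. apply Hd2. rewrite Rabs_pos_eq; lra.
Qed.

End PolarSolution.

Lemma polar_time_reversal (a : nat -> Z) (L : list nat) (u th : R -> R) :
  (forall t, is_derive u t (2 * sqrt (QL a L (u t)) * cos (th t)) /\
     is_derive th t (- sqrt (QL a L (u t)) * sin (th t) * SL 1 a L (u t))) ->
  forall t, is_derive (fun t => u (- t)) t (2 * sqrt (QL a L (u (- t))) * cos (PI - th (- t))) /\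
    is_derive (fun t => PI - th (- t)) t
      (- sqrt (QL a L (u (- t))) * sin (PI - th (- t)) * SL 1 a L (u (- t))).
Proof.
  intros Hsol t. rewrite Rtrigo_facts.cos_pi_minus, sin_PI_x.
  assert (Dneg : is_derive (fun t : R => - t) t (-1)) by (auto_derive; [auto | ring]).
  split.
  - apply (is_derive_eq _ _ (-1 * (2 * sqrt (QL a L (u (- t))) * cos (th (- t))))); [|ring].
    apply (is_derive_comp u (fun t => - t)); [apply Hsol | exact Dneg].
  - apply (is_derive_eq _ _ (0 - (-1 * (- sqrt (QL a L (u (- t))) * sin (th (- t)) *
                                       SL 1 a L (u (- t)))))); [|ring].
    apply (is_derive_minus (fun _ => PI) (fun t => th (- t))); [exact (is_derive_const _ _)|].
    apply (is_derive_comp th (fun t => - t)); [apply Hsol | exact Dneg].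
Qed.

Lemma first_integral_invariant (a : nat -> Z) (L : list nat) (u th : R -> R) :
  (forall t, is_derive u t (2 * sqrt (QL a L (u t)) * cos (th t)) /\
     is_derive th t (- sqrt (QL a L (u t)) * sin (th t) * SL 1 a L (u t))) ->
  factors_pos a L (u 0) -> 0 < sqrt (QL a L (u 0)) * sin (th 0) ->
  forall t, factors_pos a L (u t) /\
    sqrt (QL a L (u t)) * sin (th t) = sqrt (QL a L (u 0)) * sin (th 0).
Proof.
  intros Hsol D0 HA.
  assert (Dall : forall t, factors_pos a L (u t)).
  { intros t. destruct (Rle_dec 0 t) as [Ht|Ht].
    - apply (first_integral_forward a L u th Hsol D0 HA t Ht).
    - rewrite <- (Ropp_involutive t).
      apply (first_integral_forward a L (fun t => u (- t)) (fun t => PI - th (- t))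
        (polar_time_reversal a L u th Hsol)); rewrite ?Ropp_0, ?sin_PI_x; auto; lra. }
  intros t. split; [apply Dall|].
  apply (derive_zero_const (fun t => sqrt (QL a L (u t)) * sin (th t))).
  intros s. apply (polar_sin_derive a L u th Hsol s (Dall s)).
Qed.

Definition solvesL (a : nat -> Z) (L : list nat) (u th ps : R -> R) : Prop :=
  forall t,
    is_derive u t (2 * sqrt (QL a L (u t)) * cos (th t)) /\
    is_derive th t (- sqrt (QL a L (u t)) * sin (th t) * SL 1 a L (u t)) /\
    is_derive ps t (- sqrt (QL a L (u t)) * sin (th t) * SL 2 a L (u t)).

Lemma solvesL_of_polar (a : nat -> Z) (L : list nat) (A : R) (u w th ps : R -> R) : 0 < A ->
  (forall t, is_derive u t (2 * w t)) -> (forall t, QL a L (u t) = A ^ 2 + w t ^ 2) ->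
  (forall t, sqrt (QL a L (u t)) * cos (th t) = w t /\ sqrt (QL a L (u t)) * sin (th t) = A /\
     is_derive th t (- A * (QL a L (u t) * SL 1 a L (u t)) / (A ^ 2 + w t ^ 2))) ->
  (forall t, is_derive ps t (- A * SL 2 a L (u t))) -> solvesL a L u th ps.
Proof.
  intros HA Du EQ Hth Dps t. destruct (Hth t) as [Hc [Hs Dth]].
  split; [|split].
  - apply (is_derive_eq _ _ _ _ (Du t)). rewrite <- Hc. ring.
  - apply (is_derive_eq _ _ _ _ Dth).
    replace (- sqrt (QL a L (u t)) * sin (th t)) with (- (sqrt (QL a L (u t)) * sin (th t)))
      by ring.
    rewrite Hs, EQ. field. nra.
  - apply (is_derive_eq _ _ _ _ (Dps t)). rewrite <- Hs. ring.
Qed.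

Lemma solution_exists (a : nat -> Z) (L : list nat) (u0 th0 ps0 : R) :
  (exists j, In j L /\ (a j > 0)%Z) -> (exists j, In j L /\ (a j < 0)%Z) ->
  factors_pos a L u0 -> 0 < sqrt (QL a L u0) * sin th0 < 1 ->
  exists u th ps : R -> R,
    solvesL a L u th ps /\ u 0 = u0 /\ th 0 = th0 /\ ps 0 = ps0 /\
    (exists t1 t2, u t1 <> u t2) /\ (exists t1 t2, th t1 <> th t2) /\
    exists T, 0 < T /\ (forall t, u (t + T) = u t /\ th (t + T) = th t) /\
      exists Psi, 0 < Psi /\ forall t, ps (t + T) = ps t - Psi.
Proof.
  intros Hpos Hneg Du0 HA.
  assert (Hnz : exists j, In j L /\ a j <> 0%Z)
    by (destruct Hpos as [j [Hj Hj0]]; exists j; split; auto; lia).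
  set (A := sqrt (QL a L u0) * sin th0) in *.
  set (w0 := sqrt (QL a L u0) * cos th0).
  assert (Hw0 : w0 ^ 2 + A ^ 2 = QL a L u0) by apply sqrt_polar_sqr, Rlt_le, QL_pos, Du0.
  destruct (QL_orbit a L u0 A w0 Hpos Hneg Du0 HA Hw0)
    as [p [q [u [w [T [HD [_ [HT [Hsol [U0 [W0 [Hu Hw]]]]]]]]]]]].
  assert (Du : forall t, factors_pos a L (u t)) by (intros t; apply HD; pose proof (Hsol t); lra).
  assert (Er : forall t, sqrt (A ^ 2 + w t ^ 2) = sqrt (QL a L (u t)))
    by (intros t; f_equal; symmetry; apply Hsol).
  destruct (polar_angle A th0 w (fun t => QL a L (u t) * SL 1 a L (u t))) as [th [Th0 [Thw Hth]]];
    [lra | apply Hsol | rewrite Er, U0, W0; reflexivity | rewrite Er, U0; reflexivity |].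
  assert (drift_cont : forall t, continuous (fun t => - A * SL 2 a L (u t)) t).
  { intros t. apply continuity_pt_filterlim, (continuity_pt_scal (fun t => SL 2 a L (u t))).
    apply SL_comp_continuity_pt; [|apply Du].
    apply (is_derive_continuity_pt _ _ _ (proj1 (Hsol t))). }
  assert (drift_neg : forall t, - A * SL 2 a L (u t) < 0).
  { intros t. pose proof (SL2_pos a L Hnz _ (Du t)). nra. }
  assert (drift_per : forall t, - A * SL 2 a L (u (t + T)) = - A * SL 2 a L (u t)).
  { intros t. destruct (Hsol t) as [_ [_ [_ [_ [-> _]]]]]. reflexivity. }
  destruct (primitive_periodic_drift (fun t => - A * SL 2 a L (u t)) T ps0 HT
    drift_cont drift_neg drift_per)
    as [ps [Ps0 [Dps Hdrift]]].
  exists u, th, ps.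
  split; [|split; [exact U0 | split; [exact Th0 | split; [exact Ps0 |
    split; [|split; [|exists T; split; [exact HT | split; [|exact Hdrift]]]]]]]].
  - apply (solvesL_of_polar a L A u w th ps); auto; try lra.
    + apply Hsol.
    + apply Hsol.
    + intros t. rewrite <- Er. apply Hth.
  - exact Hu.
  - destruct Hw as [t1 [t2 Hne]]. exists t1, t2. intros E. apply Hne, Thw, E.
  - intros t. split; [apply Hsol | apply Thw, Hsol].
Qed.

Lemma solution_level_set (a : nat -> Z) (L : list nat) (p c q A : R) (v phi chi : R -> R) :
  (exists j, In j L /\ a j <> 0%Z) -> SL 1 a L c = 0 -> p < c < q ->
  (forall x, p <= x <= q -> factors_pos a L x) -> QL a L p < A ^ 2 -> QL a L q < A ^ 2 ->
  solvesL a L v phi chi -> factors_pos a L (v 0) -> 0 < A ->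
  sqrt (QL a L (v 0)) * sin (phi 0) = A ->
  forall t, sqrt (QL a L (v t)) * sin (phi t) = A /\
    is_derive v t (2 * (sqrt (QL a L (v t)) * cos (phi t))) /\
    is_derive (fun t => sqrt (QL a L (v t)) * cos (phi t)) t (QL a L (v t) * SL 1 a L (v t)) /\
    p <= v t <= q.
Proof.
  intros Hnz S1c Hc HD Qp Qq Hv D0 HA F0 t.
  assert (Hvphi : forall t, is_derive v t (2 * sqrt (QL a L (v t)) * cos (phi t)) /\
            is_derive phi t (- sqrt (QL a L (v t)) * sin (phi t) * SL 1 a L (v t)))
    by (intros s; split; apply Hv).
  destruct (first_integral_invariant a L v phi Hvphi D0 ltac:(lra) t) as [Dt Ft].
  rewrite F0 in Ft.
  split; [exact Ft|]. split; [apply (is_derive_eq _ _ _ _ (proj1 (Hv t))); ring|].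
  split; [apply (polar_cos_derive a L v phi Hvphi t Dt)|].
  apply (QL_superlevel_trap a L c Hnz S1c p q (A ^ 2)); auto; try (apply HD; lra).
  rewrite <- Ft. apply sqrt_mul_sin_sqr_le, Rlt_le, QL_pos, Dt.
Qed.

Lemma solution_unique (a : nat -> Z) (L : list nat) (u th ps u1 th1 ps1 : R -> R) :
  (exists j, In j L /\ (a j > 0)%Z) -> (exists j, In j L /\ (a j < 0)%Z) ->
  solvesL a L u th ps -> solvesL a L u1 th1 ps1 ->
  factors_pos a L (u 0) -> 0 < sqrt (QL a L (u 0)) * sin (th 0) < 1 ->
  u1 0 = u 0 -> th1 0 = th 0 -> ps1 0 = ps 0 ->
  forall t, u1 t = u t /\ th1 t = th t /\ ps1 t = ps t.
Proof.
  intros Hpos Hneg Hsol Hsol1 D0 HA Hu0 Hth0 Hps0.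
  assert (Hnz : exists j, In j L /\ a j <> 0%Z)
    by (destruct Hpos as [j [Hj Hj0]]; exists j; split; auto; lia).
  set (A := sqrt (QL a L (u 0)) * sin (th 0)) in *.
  destruct (QL_level_interval a L (u 0) (A ^ 2) Hpos Hneg D0 ltac:(split; nra))
    as [p [c [q [_ [Hc [HD [Qp [Qq [S1c _]]]]]]]]].
  (* both solutions move on the same level set, inside [p, q] where [Q'] is Lipschitz *)
  pose proof (solution_level_set a L p c q A u th ps Hnz S1c Hc HD Qp Qq Hsol D0
    ltac:(lra) eq_refl) as H0.
  pose proof (solution_level_set a L p c q A u1 th1 ps1 Hnz S1c Hc HD Qp Qq Hsol1
    ltac:(rewrite Hu0; exact D0) ltac:(lra) ltac:(rewrite Hu0, Hth0; reflexivity)) as H1.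
  destruct (QL_SL1_lipschitz a L p q ltac:(lra) HD) as [M [HM Lip]].
  pose proof (hamiltonian_unique (fun x => QL a L x * SL 1 a L x) p q M u
    (fun t => sqrt (QL a L (u t)) * cos (th t)) u1 (fun t => sqrt (QL a L (u1 t)) * cos (th1 t))
    HM Lip (fun t => proj2 (H0 t)) (fun t => proj2 (H1 t)) Hu0
    ltac:(cbv beta; rewrite Hu0, Hth0; reflexivity)) as Huw.
  assert (Hrhs : forall k t, - sqrt (QL a L (u1 t)) * sin (th1 t) * SL k a L (u1 t) =
                             - sqrt (QL a L (u t)) * sin (th t) * SL k a L (u t)).
  { intros k t. rewrite (proj1 (Huw t)).
    replace (- sqrt (QL a L (u t)) * sin (th1 t)) with (- (sqrt (QL a L (u t)) * sin (th1 t)))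
      by ring.
    rewrite <- (proj1 (Huw t)), (proj1 (H1 t)), (proj1 (Huw t)), <- (proj1 (H0 t)). ring. }
  intros t. split; [apply Huw|]. split.
  - apply (derive_same_eq th1 th (fun t => - sqrt (QL a L (u t)) * sin (th t) * SL 1 a L (u t)));
      auto; intros s; [rewrite <- Hrhs|]; apply Hsol1 || apply Hsol.
  - apply (derive_same_eq ps1 ps (fun t => - sqrt (QL a L (u t)) * sin (th t) * SL 2 a L (u t)));
      auto; intros s; [rewrite <- Hrhs|]; apply Hsol1 || apply Hsol.
Qed.

Theorem proposition7p11 (m : nat) (a : nat -> Z) (u0 th0 ps0 : R) :
  standing a m ->
  (forall j, (j < m)%nat -> IZR (a j) * u0 + 1 > 0) ->
  0 < sqrt (Q a m u0) * sin th0 < 1 ->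
  exists u th ps : R -> R,
    solves a m u th ps /\ u 0 = u0 /\ th 0 = th0 /\ ps 0 = ps0 /\
    (forall u' th' ps' : R -> R,
        solves a m u' th' ps' -> u' 0 = u0 -> th' 0 = th0 -> ps' 0 = ps0 ->
        forall t, u' t = u t /\ th' t = th t /\ ps' t = ps t) /\
    (exists t1 t2, u t1 <> u t2) /\
    (exists t1 t2, th t1 <> th t2) /\
    exists T, 0 < T /\
      (forall t, u (t + T) = u t /\ th (t + T) = th t) /\
      exists Psi, 0 < Psi /\ forall t, ps (t + T) = ps t - Psi.
Proof.
  intros Hst Hu0 HA.
  destruct (standing_signs a m Hst) as [Hpos Hneg].
  assert (Du0 : factors_pos a (seq 0 m) u0)
    by (intros j Hj; apply in_seq in Hj; apply Hu0; lia).
  destruct (solution_exists a (seq 0 m) u0 th0 ps0 Hpos Hneg Du0 HA)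
    as [u [th [ps [Hsol [U0 [Th0 [Ps0 Hrest]]]]]]].
  exists u, th, ps. do 4 (split; auto). split; [|exact Hrest].
  intros u' th' ps' Hsol' U0' Th0' Ps0'.
  apply (solution_unique a (seq 0 m) u th ps u' th' ps'); rewrite ?U0, ?Th0, ?Ps0; auto.
Qed.
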